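(* Assume (A1)–(A6) and that the numerical integrator $\Psi$ has order $p\ge1$ in $X$ for the problems $v'(s)=f(t_n+s,v(s))$ and $z'(s)=f(t_n+\frac k2+s,z(s))$. Let $\overline w_n$ be the generalized solution of $\overline w_n'=A\overline w_n$, $\overline w_n(0)=\Psi_{k/2}^{f,t_n}(u(t_n))$, $\partial\overline w_n(s)=\partial\big(u(t_n)+\frac k2 f(t_n,u(t_n))+sAu(t_n)\big)$, and let $\overline u_{n+1}=\Psi_{k/2}^{f,t_n+k/2}(\overline w_n(k))$ (one step of the modified exponential Strang method started from the exact value). Then the local error satisfies $$\rho_{n+1}:=\overline u_{n+1}-u(t_{n+1})=O(k^2).$$
   Context: Let $X,Y$ be Banach spaces, $T>0$, $A:D(A)\subset X\to X$ and $\partial:D(A)\to Y$ linear operators, $f:[0,T]\times X\to X$, $g:[0,T]\to Y$, and let $u$ be the solution of $u'(t)=Au(t)+f(t,u(t))$, $u(0)=u_0$, $\partial u(t)=g(t)$, $0\le t\le T$. Standing hypotheses: (A1) $\partial$ is onto. (A2) $\ker\partial$ is dense in $X$ and the restriction $A_0$ of $A$ to $D(A_0)=\ker\partial$ generates a $C_0$-semigroup $(e^{tA_0})_{t\ge0}$ on $X$ of negative type $\omega$. (A3) For every $z\in\mathbb C$ with $\Re z>\omega$ and $v\in Y$, the problem $Ax=zx$, $\partial x=v$ has a unique solution $x=:K(z)v\in D(A)$, and $\|K(z)v\|\le C\|v\|$ with $C$ uniform for $\Re z\ge\omega_0>\omega$. (A4) $f\in C^1([0,T]\times X,X)$. (A5)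 $u\in C^2([0,T],X)$, $u(t)\in D(A^2)$ for all $t$, and $Au,A^2u\in C^1([0,T],X)$. (A6) $f(t,u(t))\in D(A)$ for all $t$ and $Af(\cdot,u(\cdot))\in C([0,T],X)$. Generalized solution: for $u_0\in X$, $v_0,v_1\in Y$, the generalized solution of $w'(s)=Aw(s)$, $w(0)=u_0$, $\partial w(s)=v_0+v_1s$ is $w(s)=e^{sA_0}(u_0-K(0)v_0)+K(0)(v_0+v_1s)-\int_0^s e^{\sigma A_0}K(0)v_1\,d\sigma$. Time step $k>0$, $t_n=nk$. For $\tau\in[0,T]$, $\Psi_k^{f,\tau}(v_0)$ denotes one step of size $k$ of a numerical integrator applied to $v'(s)=f(\tau+s,v(s))$, $v(0)=v_0$; order $p$ means $\Psi_k^{f,\tau}(v_0)-v(k)=O(k^{p+1})$ uniformly for the arguments considered. Notation $a=O(b)$ means $\|a\|\le Cb$ with $C$ independent of $k$ (small enough) and of $n$ with $0\le nk\le T$. *)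

From Stdlib Require Export Reals Lra ClassicalEpsilon.
Open Scope R_scope.

Class Banach (V : Type) := {
  bzero : V;
  badd : V -> V -> V;
  bopp : V -> V;
  bscal : R -> V -> V;
  bnorm : V -> R;
  badd_assoc : forall x y z, badd x (badd y z) = badd (badd x y) z;
  badd_comm : forall x y, badd x y = badd y x;
  badd_0 : forall x, badd x bzero = x;
  badd_opp : forall x, badd x (bopp x) = bzero;
  bscal_1 : forall x, bscal 1 x = x;
  bscal_assoc : forall a b x, bscal a (bscal b x) = bscal (a * b) x;
  bscal_distr_v : forall a x y, bscal a (badd x y) = badd (bscal a x) (bscal a y);
  bscal_distr_s : forall a b x, bscal (a + b) x = badd (bscal a x) (bscal b x);
  bnorm_eq0 : forall x, bnorm x = 0 -> x = bzero;
  bnorm_triangle : forall x y, bnorm (badd x y) <= bnorm x + bnorm y;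
  bnorm_scal : forall a x, bnorm (bscal a x) = Rabs a * bnorm x;
  bcomplete : forall u : nat -> V,
    (forall eps, eps > 0 -> exists N, forall m n, (m >= N)%nat -> (n >= N)%nat ->
        bnorm (badd (u m) (bopp (u n))) < eps) ->
    exists l, forall eps, eps > 0 -> exists N, forall n, (n >= N)%nat ->
        bnorm (badd (u n) (bopp l)) < eps
}.

Definition bsub {V} `{Banach V} (x y : V) : V := badd x (bopp y).

Definition lim_in {V} `{Banach V} (Dm : R -> Prop) (g : R -> V) (a : R) (l : V) : Prop :=
  forall eps, eps > 0 -> exists delta, delta > 0 /\
    forall t, Dm t -> t <> a -> Rabs (t - a) < delta -> bnorm (bsub (g t) l) < eps.

Definition cont_on {V} `{Banach V} (a b : R) (g : R -> V) : Prop :=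
  forall t, a <= t <= b -> lim_in (fun s => a <= s <= b) g t (g t).

Definition deriv_on {V} `{Banach V} (a b : R) (g g' : R -> V) : Prop :=
  forall t, a <= t <= b ->
    lim_in (fun h => a <= t + h <= b) (fun h => bscal (/ h) (bsub (g (t + h)) (g t))) 0 (g' t).

Definition C1_on {V} `{Banach V} (a b : R) (g : R -> V) : Prop :=
  exists g', deriv_on a b g g' /\ cont_on a b g'.

Definition C2_on {V} `{Banach V} (a b : R) (g : R -> V) : Prop :=
  exists g', deriv_on a b g g' /\ C1_on a b g'.

Fixpoint bsum {V} `{Banach V} (N : nat) (F : nat -> V) : V :=
  match N with O => bzero | S n => badd (bsum n F) (F n) end.

(** Riemann integral (limit of uniform Riemann sums; used only for continuous integrands). *)
Definition is_RInt {V} `{Banach V} (g : R -> V) (a b : R) (I : V) : Prop :=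
  forall eps, eps > 0 -> exists N0, forall N, (N >= N0)%nat -> (N > 0)%nat ->
    bnorm (bsub (bscal ((b - a) / INR N)
                   (bsum N (fun i => g (a + INR i * (b - a) / INR N)))) I) < eps.

Definition RInt {V} `{Banach V} (g : R -> V) (a b : R) : V :=
  epsilon (inhabits bzero) (fun I => is_RInt g a b I).

Definition subspace {V} `{Banach V} (Dm : V -> Prop) : Prop :=
  Dm bzero /\ forall x y a, Dm x -> Dm y -> Dm (badd x y) /\ Dm (bscal a x).

Definition lin_on {V W} `{Banach V} `{Banach W} (Dm : V -> Prop) (L : V -> W) : Prop :=
  forall x y a, Dm x -> Dm y -> L (badd x y) = badd (L x) (L y) /\ L (bscal a x) = bscal a (L x).

Definition bounded_linear {V W} `{Banach V} `{Banach W} (L : V -> W) : Prop :=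
  lin_on (fun _ => True) L /\ exists M, forall x, bnorm (L x) <= M * bnorm x.

Definition C0_semigroup {V} `{Banach V} (S : R -> V -> V) : Prop :=
  (forall t, t >= 0 -> bounded_linear (S t)) /\
  (forall x, S 0 x = x) /\
  (forall t s x, t >= 0 -> s >= 0 -> S (t + s) x = S t (S s x)) /\
  (forall x, lim_in (fun t => t >= 0) (fun t => S t x) 0 x).

Definition generates {V} `{Banach V} (S : R -> V -> V) (D0 : V -> Prop) (A0 : V -> V) : Prop :=
  forall x,
    (D0 x <-> exists l, lim_in (fun h => h > 0) (fun h => bscal (/ h) (bsub (S h x) x)) 0 l) /\
    (D0 x -> lim_in (fun h => h > 0) (fun h => bscal (/ h) (bsub (S h x) x)) 0 (A0 x)).

Definition negative_type {V} `{Banach V} (S : R -> V -> V) (omega : R) : Prop :=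
  omega < 0 /\ exists M, forall t x, t >= 0 -> bnorm (S t x) <= M * exp (omega * t) * bnorm x.

(** f in C^1([0,T] x X, X) (Frechet, derivative continuous in operator norm);
    [Df t x s y] is the derivative at (t,x) applied to the increment (s,y). *)
Definition C1_TX {V} `{Banach V} (T : R) (f : R -> V -> V) : Prop :=
  exists Df : R -> V -> R -> V -> V,
    (forall t x, 0 <= t <= T ->
       (forall s1 s2 y1 y2 a,
          Df t x (s1 + s2) (badd y1 y2) = badd (Df t x s1 y1) (Df t x s2 y2) /\
          Df t x (a * s1) (bscal a y1) = bscal a (Df t x s1 y1)) /\
       (exists M, forall s y, bnorm (Df t x s y) <= M * (Rabs s + bnorm y))) /\
    (forall t x, 0 <= t <= T -> forall eps, eps > 0 -> exists delta, delta > 0 /\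
       forall s y, 0 <= t + s <= T -> Rabs s + bnorm y < delta ->
         bnorm (bsub (bsub (f (t + s) (badd x y)) (f t x)) (Df t x s y))
           <= eps * (Rabs s + bnorm y)) /\
    (forall t x, 0 <= t <= T -> forall eps, eps > 0 -> exists delta, delta > 0 /\
       forall t' x', 0 <= t' <= T -> Rabs (t' - t) + bnorm (bsub x' x) < delta ->
         forall s y, bnorm (bsub (Df t' x' s y) (Df t x s y)) <= eps * (Rabs s + bnorm y)).

(** Generalized solution of w' = A w, w(0) = u0, d w(s) = v0 + v1 s, with K0 = K(0):
    w(s) = S s (u0 - K0 v0) + K0 (v0 + s v1) - int_0^s S sigma (K0 v1) dsigma. *)
Definition gen_sol {X Y} `{Banach X} `{Banach Y} (S : R -> X -> X) (K0 : Y -> X)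
    (u0 : X) (v0 v1 : Y) (s : R) : X :=
  bsub (badd (S s (bsub u0 (K0 v0))) (K0 (badd v0 (bscal s v1))))
       (RInt (fun sigma => S sigma (K0 v1)) 0 s).

Definition wbar_k {X Y} `{Banach X} `{Banach Y} (S : R -> X -> X) (K : R -> Y -> X)
    (A : X -> X) (dA : X -> Y) (f : R -> X -> X) (Psi : R -> R -> X -> X)
    (u : R -> X) (k : R) (n : nat) : X :=
  let tn := INR n * k in
  gen_sol S (K 0) (Psi (k / 2) tn (u tn))
    (dA (badd (u tn) (bscal (k / 2) (f tn (u tn))))) (dA (A (u tn))) k.

(* The local error splits into pieces that are each O(k^2).
   - Each half step of [Psi] (order [p >= 1]) is O(k^2)-close to the exact flow of [v' = f(t, v)], and
     that flow is O(k^2)-close to the explicit Euler step.  The flow exists because [f], being C^1, is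
     bounded and Lipschitz on a tube around the graph of [u]; it is built as a limit of Euler polygons.
   - Subtracting the lifts [K(0) v] of the boundary values leaves data in [D(A0)], and
     [e^{kA0} z - z = int_0^k e^{sA0} A z ds] then shows that [wbar_n(k)] is O(k^2)-close to
     [u(t_n) + (k/2) f(t_n, u(t_n)) + k A u(t_n)]; the bounds on [A^2 u] and [A f(., u)] come from (A5)-(A6).
   - Taylor's formula gives [u(t_(n+1)) = u(t_n) + k (A u + f)(t_n, u(t_n)) + O(k^2)], and the remaining
     difference between the two evaluations of [f] is controlled by its Lipschitz constant. *)

From Stdlib Require Import Reals Lra Lia Psatz List Classical ClassicalEpsilon.
Open Scope R_scope.

(** * Linear combinations and norms *)

Section VectorAlgebra.
Context {V : Type} {BV : Banach V}.

Lemma badd_0_l x : badd bzero x = x.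
Proof. rewrite badd_comm; apply badd_0. Qed.

Lemma bscal_0_l x : bscal 0 x = bzero.
Proof.
  assert (H := bscal_distr_s 0 0 x). replace (0 + 0) with 0 in H by ring.
  assert (H2 : badd (bscal 0 x) (bopp (bscal 0 x))
               = badd (badd (bscal 0 x) (bscal 0 x)) (bopp (bscal 0 x))) by (rewrite <- H; reflexivity).
  rewrite badd_opp, <- badd_assoc, badd_opp, badd_0 in H2. auto.
Qed.

Lemma bopp_scal x : bopp x = bscal (-1) x.
Proof.
  assert (H : badd x (bscal (-1) x) = bzero).
  { rewrite <- (bscal_1 x) at 1. rewrite <- bscal_distr_s. replace (1 + -1) with 0 by ring. apply bscal_0_l. }
  assert (E : bopp x = badd (badd x (bscal (-1) x)) (bopp x)) by (rewrite H, badd_0_l; auto).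
  rewrite E, (badd_comm x), <- badd_assoc, badd_opp, badd_0. auto.
Qed.

Lemma bscal_0_r a : bscal a bzero = bzero.
Proof. rewrite <- (bscal_0_l bzero), bscal_assoc. replace (a * 0) with 0 by ring. auto. Qed.

Lemma bsum_ext N F G : (forall i, (i < N)%nat -> F i = G i) -> bsum N F = bsum N G.
Proof. induction N; simpl; intros; auto. rewrite IHN, H; auto. Qed.

Lemma bsum_add N F G : bsum N (fun i => badd (F i) (G i)) = badd (bsum N F) (bsum N G).
Proof.
  induction N; simpl. rewrite badd_0; auto.
  rewrite IHN, !badd_assoc. f_equal. rewrite <- !badd_assoc. f_equal. apply badd_comm.
Qed.

Lemma bsum_scal N r F : bsum N (fun i => bscal r (F i)) = bscal r (bsum N F).
Proof. induction N; simpl. rewrite bscal_0_r; auto. rewrite IHN, bscal_distr_v; auto. Qed.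

Lemma bsum_zero N : bsum N (fun _ => bzero) = bzero.
Proof. induction N; simpl; auto. rewrite IHN, badd_0; auto. Qed.

(* Formal linear combinations of atoms, and their coefficient vectors; [vring] below
   decides equalities of vector expressions by comparing coefficients. *)
Inductive vexp := VAt (n : nat) | V0 | VAdd (e1 e2 : vexp) | VOpp (e : vexp)
  | VScal (r : R) (e : vexp) | VSub (e1 e2 : vexp).

Fixpoint vden (env : nat -> V) (e : vexp) : V :=
  match e with
  | VAt n => env n | V0 => bzero | VAdd a b => badd (vden env a) (vden env b)
  | VOpp a => bopp (vden env a) | VScal r a => bscal r (vden env a)
  | VSub a b => bsub (vden env a) (vden env b)
  end.

Fixpoint vcoef (e : vexp) (i : nat) : R :=
  match e with
  | VAt n => if Nat.eqb i n then 1 else 0 | V0 => 0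
  | VAdd a b => vcoef a i + vcoef b i | VOpp a => - vcoef a i
  | VScal r a => r * vcoef a i | VSub a b => vcoef a i - vcoef b i
  end.

Fixpoint vsupp (e : vexp) : nat :=
  match e with
  | VAt n => S n | V0 => O | VAdd a b => Nat.max (vsupp a) (vsupp b) | VOpp a => vsupp a
  | VScal _ a => vsupp a | VSub a b => Nat.max (vsupp a) (vsupp b)
  end.

Lemma vden_bsum env e N : (vsupp e <= N)%nat ->
  vden env e = bsum N (fun i => bscal (vcoef e i) (env i)).
Proof.
  induction e; simpl; intros.
  - induction N. lia. simpl. destruct (Nat.eq_dec n N).
    + subst. rewrite Nat.eqb_refl, bscal_1.
      rewrite (bsum_ext _ _ (fun _ => bzero)), bsum_zero, badd_0_l; auto.
      intros. destruct (Nat.eqb_spec i N); [lia|]. apply bscal_0_l.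
    + rewrite IHN by lia. destruct (Nat.eqb_spec N n); [lia|]. rewrite bscal_0_l, badd_0; auto.
  - rewrite (bsum_ext _ _ (fun _ => bzero)). symmetry; apply bsum_zero.
    intros; apply bscal_0_l.
  - rewrite IHe1, IHe2 by lia. rewrite <- bsum_add. apply bsum_ext; intros.
    rewrite bscal_distr_s; auto.
  - rewrite IHe by lia. rewrite bopp_scal, <- bsum_scal. apply bsum_ext; intros.
    rewrite bscal_assoc. f_equal; ring.
  - rewrite IHe by lia. rewrite <- bsum_scal. apply bsum_ext; intros.
    rewrite bscal_assoc. auto.
  - unfold bsub. rewrite IHe1, IHe2 by lia. rewrite bopp_scal, <- bsum_scal, <- bsum_add.
    apply bsum_ext; intros. rewrite bscal_assoc, <- bscal_distr_s. f_equal; ring.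
Qed.

Lemma vden_eq env e1 e2 : (forall i, vcoef e1 i = vcoef e2 i) -> vden env e1 = vden env e2.
Proof.
  intros H. rewrite (vden_bsum env e1 (Nat.max (vsupp e1) (vsupp e2))) by lia.
  rewrite (vden_bsum env e2 (Nat.max (vsupp e1) (vsupp e2))) by lia.
  apply bsum_ext; intros; rewrite H; auto.
Qed.

End VectorAlgebra.

Ltac inlist t l :=
  match l with
  | nil => constr:(false)
  | t :: _ => constr:(true)
  | _ :: ?l' => inlist t l'
  end.

Ltac add_atoms t l :=
  match t with
  | badd ?a ?b => let l1 := add_atoms a l in add_atoms b l1
  | bsub ?a ?b => let l1 := add_atoms a l in add_atoms b l1
  | bopp ?a => add_atoms a l
  | bscal _ ?a => add_atoms a l
  | bzero => l
  | _ => let b := inlist t l in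
         match b with true => l | false => constr:(t :: l) end
  end.

Ltac find_idx t l :=
  match l with
  | t :: _ => constr:(O)
  | _ :: ?l' => let n := find_idx t l' in constr:(S n)
  end.

Ltac reify t l :=
  match t with
  | badd ?a ?b => let x := reify a l in let y := reify b l in constr:(VAdd x y)
  | bsub ?a ?b => let x := reify a l in let y := reify b l in constr:(VSub x y)
  | bopp ?a => let x := reify a l in constr:(VOpp x)
  | bscal ?r ?a => let x := reify a l in constr:(VScal r x)
  | bzero => constr:(V0)
  | _ => let n := find_idx t l in constr:(VAt n)
  end.

Ltac coef_cases i l :=
  match l with
  | nil => simpl; first [ring | lra | nra]
  | _ :: ?l' => destruct i as [|i]; [simpl; first [ring | lra | nra] | coef_cases i l']
  end.

Ltac vring :=
  match goal with
  | |- @eq ?V ?x ?y =>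
    let l0 := add_atoms x (@nil V) in
    let l := add_atoms y l0 in
    let ex := reify x l in
    let ey := reify y l in
    change (vden (fun i => nth i l bzero) ex = vden (fun i => nth i l bzero) ey);
    apply vden_eq; let i := fresh "i" in intro i; simpl vcoef;
    coef_cases i l
  end.

Section Norm.
Context {V : Type} {BV : Banach V}.

Lemma bnorm_zero : bnorm (@bzero V BV) = 0.
Proof. rewrite <- (bscal_0_l bzero), bnorm_scal, Rabs_R0. ring. Qed.

Lemma bnorm_opp x : bnorm (bopp x) = bnorm x.
Proof. rewrite bopp_scal, bnorm_scal, Rabs_left by lra. ring. Qed.

Lemma bnorm_ge0 x : 0 <= bnorm x.
Proof.
  assert (H := bnorm_triangle x (bopp x)). rewrite badd_opp, bnorm_zero, bnorm_opp in H. lra.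
Qed.

Lemma bnorm_sub_sym x y : bnorm (bsub x y) = bnorm (bsub y x).
Proof. replace (bsub x y) with (bopp (bsub y x)) by vring. apply bnorm_opp. Qed.

Lemma bnorm_sub_triangle x y z : bnorm (bsub x z) <= bnorm (bsub x y) + bnorm (bsub y z).
Proof. replace (bsub x z) with (badd (bsub x y) (bsub y z)) by vring. apply bnorm_triangle. Qed.

Lemma bnorm_sub_le x y : bnorm (bsub x y) <= bnorm x + bnorm y.
Proof. unfold bsub. rewrite <- (bnorm_opp y). apply bnorm_triangle. Qed.

Lemma bnorm_sub_diag x : bnorm (bsub x x) = 0.
Proof. unfold bsub. rewrite badd_opp. apply bnorm_zero. Qed.

Lemma bnorm_sub_ge x y : bnorm x - bnorm y <= bnorm (bsub x y).
Proof.
  replace x with (badd (bsub x y) y) at 1 by vring. assert (H := bnorm_triangle (bsub x y) y). lra.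
Qed.

Lemma bnorm_sub_le0 x y : bnorm (bsub x y) <= 0 -> x = y.
Proof.
  intros H. assert (H0 : bnorm (bsub x y) = 0) by (pose proof (bnorm_ge0 (bsub x y)); lra).
  apply bnorm_eq0 in H0. replace x with (badd (bsub x y) y) by vring. rewrite H0. apply badd_0_l.
Qed.

End Norm.

(** * Continuous induction and mean value inequalities *)

Lemma continuous_induction (P : R -> Prop) a b : a <= b -> P a ->
  (forall c, a < c <= b -> (forall y, a <= y < c -> P y) -> P c) ->
  (forall c, a <= c < b -> (forall y, a <= y <= c -> P y) ->
     exists d, d > 0 /\ forall y, c < y <= c + d -> y <= b -> P y) ->
  forall y, a <= y <= b -> P y.
Proof.
  intros Hab Pa Hleft Hright.
  set (E := fun x => a <= x <= b /\ forall y, a <= y <= x -> P y).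
  assert (Ea : E a) by (split; [lra | intros y Hy; replace y with a by lra; auto]).
  assert (Hbd : bound E) by (exists b; intros x [Hx _]; lra).
  destruct (completeness E Hbd (ex_intro _ a Ea)) as [c [Hub Hlub]].
  assert (Hac : a <= c) by (apply Hub; auto).
  assert (Hcb : c <= b) by (apply Hlub; intros x [Hx _]; lra).
  assert (Hbelow : forall y, a <= y < c -> P y).
  { intros y Hy. destruct (classic (exists x, E x /\ y < x)) as [[x [[_ Hx] Hyx]]|Hn].
    - apply Hx. lra.
    - assert (c <= y); [|lra]. apply Hlub. intros x Ex.
      destruct (Rle_or_lt x y); auto. exfalso; eauto. }
  assert (Hupto : forall y, a <= y <= c -> P y).
  { intros y Hy. destruct (Rlt_or_le y c); [apply Hbelow; lra|].
    replace y with c by lra. destruct (Req_dec c a) as [->|]; auto. apply Hleft; [lra|auto]. }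
  assert (Hcb' : c = b).
  { destruct (Req_dec c b) as [|Hne]; auto. exfalso.
    destruct (Hright c ltac:(lra) Hupto) as [d [Hd Hstep]].
    set (x := Rmin b (c + d)).
    assert (x <= b) by apply Rmin_l. assert (x <= c + d) by apply Rmin_r.
    assert (c < x) by (apply Rmin_glb_lt; lra).
    assert (E x); [|assert (x <= c) by (apply Hub; auto); lra].
    split; [lra|]. intros y Hy. destruct (Rle_or_lt y c); [apply Hupto; lra|apply Hstep; lra]. }
  subst c. auto.
Qed.

Section MeanValue.
Context {V : Type} {BV : Banach V}.

Lemma mean_value_ineq_right (g : R -> V) a b B : a <= b -> 0 <= B -> cont_on a b g ->
  (forall s, a <= s < b -> exists eta, eta > 0 /\ forall d, 0 < d < eta -> s + d <= b ->
      bnorm (bsub (g (s + d)) (g s)) <= B * d) ->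
  bnorm (bsub (g b) (g a)) <= B * (b - a).
Proof.
  intros Hab HB Hc Hd. apply Rle_plus_epsilon. intros eps Heps.
  set (P := fun y => bnorm (bsub (g y) (g a)) <= B * (y - a) + eps).
  enough (P b) by (unfold P in *; lra).
  apply (continuous_induction P a b Hab); [| | |lra].
  - unfold P. rewrite bnorm_sub_diag. lra.
  - intros c Hc' Hbelow. unfold P. apply Rle_plus_epsilon. intros e1 He1.
    destruct (Hc c ltac:(lra) e1 He1) as [eta [Heta Hcont]].
    set (y := Rmax a (c - eta / 2)).
    assert (a <= y) by apply Rmax_l. assert (c - eta / 2 <= y) by apply Rmax_r.
    assert (y < c) by (apply Rmax_lub_lt; lra).
    specialize (Hbelow y ltac:(lra)). unfold P in Hbelow.
    specialize (Hcont y ltac:(lra) ltac:(lra) ltac:(rewrite Rabs_left; lra)).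
    rewrite bnorm_sub_sym in Hcont.
    pose proof (bnorm_sub_triangle (g c) (g y) (g a)). nra.
  - intros c Hc' Hupto. destruct (Hd c Hc') as [eta [Heta H]].
    exists (eta / 2). split; [lra|]. intros y Hy Hyb.
    specialize (H (y - c) ltac:(lra) ltac:(lra)). replace (c + (y - c)) with y in H by ring.
    specialize (Hupto c ltac:(lra)). unfold P in *.
    pose proof (bnorm_sub_triangle (g y) (g c) (g a)). nra.
Qed.

Lemma local_lipschitz_mean_value (g : R -> V) a b B : a <= b -> 0 <= B ->
  (forall s, a <= s <= b -> exists eta, eta > 0 /\ forall t, a <= t <= b -> Rabs (t - s) < eta ->
     bnorm (bsub (g t) (g s)) <= B * Rabs (t - s)) ->
  bnorm (bsub (g b) (g a)) <= B * (b - a).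
Proof.
  intros Hab HB Hloc. apply mean_value_ineq_right; auto.
  - intros s Hs e He. destruct (Hloc s Hs) as [eta [Heta H]].
    exists (Rmin eta (e / (B + 1))). split; [apply Rmin_glb_lt; auto; apply Rdiv_lt_0_compat; lra|].
    intros t Ht _ Hlt. specialize (H t Ht (Rlt_le_trans _ _ _ Hlt (Rmin_l _ _))).
    assert (Hts : Rabs (t - s) < e / (B + 1)) by (eapply Rlt_le_trans; [apply Hlt|apply Rmin_r]).
    apply (Rmult_lt_compat_r (B + 1)) in Hts; [|lra].
    replace (e / (B + 1) * (B + 1)) with e in Hts by (field; lra). pose proof (Rabs_pos (t - s)). nra.
  - intros s Hs. destruct (Hloc s ltac:(lra)) as [eta [Heta H]].
    exists eta. split; auto. intros d Hd Hdb.
    specialize (H (s + d) ltac:(lra) ltac:(replace (s + d - s) with d by ring; rewrite Rabs_pos_eq; lra)).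
    replace (s + d - s) with d in H by ring. rewrite Rabs_pos_eq in H by lra. exact H.
Qed.

Lemma mean_value_ineq (g : R -> V) a b B : a <= b -> 0 <= B -> cont_on a b g ->
  (forall s, a <= s < b -> forall e, e > 0 -> exists eta, eta > 0 /\
      forall d, 0 < d < eta -> s + d <= b -> bnorm (bsub (g (s + d)) (g s)) <= (B + e) * d) ->
  bnorm (bsub (g b) (g a)) <= B * (b - a).
Proof.
  intros Hab HB Hc Hd. apply Rle_plus_epsilon. intros e He.
  set (e' := e / (b - a + 1)).
  assert (0 < e') by (unfold e'; apply Rdiv_lt_0_compat; lra).
  assert (H0 := mean_value_ineq_right g a b (B + e') Hab ltac:(lra) Hc (fun s Hs => Hd s Hs e' H)).
  assert (e' * (b - a) <= e).
  { unfold e'. apply (Rmult_le_reg_r (b - a + 1)); [lra|]. field_simplify; lra. }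
  nra.
Qed.

Lemma lipschitz_cont_on (g : R -> V) a b L : 0 <= L ->
  (forall s t, a <= s -> s <= t -> t <= b -> bnorm (bsub (g t) (g s)) <= L * (t - s)) ->
  cont_on a b g.
Proof.
  intros HL H s Hs e He. exists (e / (L + 1)). split; [apply Rdiv_lt_0_compat; lra|].
  intros t Ht _ Hts.
  assert (Hq : e / (L + 1) * (L + 1) = e) by (field; lra).
  destruct (Rle_or_lt s t).
  - specialize (H s t ltac:(lra) ltac:(lra) ltac:(lra)). rewrite Rabs_pos_eq in Hts by lra. nra.
  - specialize (H t s ltac:(lra) ltac:(lra) ltac:(lra)). rewrite Rabs_left in Hts by lra.
    rewrite bnorm_sub_sym. nra.
Qed.

Lemma deriv_on_linear_approx a b g g' s : deriv_on a b g g' -> a <= s <= b ->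
  forall e, e > 0 -> exists eta, eta > 0 /\ forall d, d <> 0 -> Rabs d < eta -> a <= s + d <= b ->
    bnorm (bsub (bsub (g (s + d)) (g s)) (bscal d (g' s))) <= e * Rabs d.
Proof.
  intros Hd Hs e He. destruct (Hd s Hs e He) as [eta [Heta H]].
  exists eta; split; auto. intros d Hd0 Hdl Hdom.
  specialize (H d Hdom Hd0 ltac:(rewrite Rminus_0_r; auto)).
  set (w := bsub (g (s + d)) (g s)) in *.
  replace (bsub w (bscal d (g' s))) with (bscal d (bsub (bscal (/ d) w) (g' s))).
  { rewrite bnorm_scal. pose proof (Rabs_pos d). nra. }
  transitivity (bsub (bscal (d * / d) w) (bscal d (g' s))); [vring|].
  rewrite Rinv_r, bscal_1 by auto. auto.
Qed.

Lemma deriv_on_cont_on a b a' b' g g' : deriv_on a b g g' -> a <= a' -> b' <= b ->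
  cont_on a' b' g.
Proof.
  intros Hd Ha Hb s Hs e He.
  destruct (deriv_on_linear_approx a b g g' s Hd ltac:(lra) 1 ltac:(lra)) as [eta [Heta H]].
  set (K := 1 + bnorm (g' s)).
  assert (HK : 0 < K) by (unfold K; pose proof (bnorm_ge0 (g' s)); lra).
  exists (Rmin eta (e / K)). split; [apply Rmin_glb_lt; auto; apply Rdiv_lt_0_compat; lra|].
  intros t Ht Hne Hts.
  assert (Hts1 : Rabs (t - s) < eta) by (eapply Rlt_le_trans; [apply Hts|apply Rmin_l]).
  assert (Hts2 : Rabs (t - s) < e / K) by (eapply Rlt_le_trans; [apply Hts|apply Rmin_r]).
  specialize (H (t - s) ltac:(lra) Hts1 ltac:(replace (s + (t - s)) with t by ring; lra)).
  replace (s + (t - s)) with t in H by ring.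
  replace (bsub (g t) (g s))
    with (badd (bsub (bsub (g t) (g s)) (bscal (t - s) (g' s))) (bscal (t - s) (g' s))) by vring.
  eapply Rle_lt_trans; [apply bnorm_triangle|]. rewrite bnorm_scal.
  assert (HtsK : Rabs (t - s) * K < e).
  { apply (Rmult_lt_compat_r K) in Hts2; auto. unfold Rdiv in Hts2.
    rewrite Rmult_assoc, Rinv_l in Hts2; lra. }
  unfold K in HtsK. pose proof (Rabs_pos (t - s)). nra.
Qed.

Lemma deriv_on_sub_linear a b g g' c : deriv_on a b g g' ->
  deriv_on a b (fun t => bsub (g t) (bscal t c)) (fun t => bsub (g' t) c).
Proof.
  intros Hd t Ht e He. destruct (Hd t Ht e He) as [eta [Heta H]].
  exists eta. split; auto. intros h Hh Hne Hlt. specialize (H h Hh Hne Hlt).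
  replace (bsub (bscal (/ h) (bsub (bsub (g (t + h)) (bscal (t + h) c)) (bsub (g t) (bscal t c))))
                (bsub (g' t) c))
    with (badd (bsub (bscal (/ h) (bsub (g (t + h)) (g t))) (g' t)) (bscal (1 - / h * h) c)) by vring.
  rewrite Rinv_l, Rminus_diag, bscal_0_l, badd_0 by auto. exact H.
Qed.

Lemma deriv_mean_value_ineq a b g g' a' b' c B : deriv_on a b g g' -> a <= a' -> a' <= b' -> b' <= b ->
  (forall t, a' <= t <= b' -> bnorm (bsub (g' t) c) <= B) ->
  bnorm (bsub (bsub (g b') (g a')) (bscal (b' - a') c)) <= B * (b' - a').
Proof.
  intros Hd Ha Hab Hb HB.
  assert (HB0 : 0 <= B) by (pose proof (bnorm_ge0 (bsub (g' a') c)); specialize (HB a'); lra).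
  set (G := fun t => bsub (g t) (bscal t c)).
  assert (HG := deriv_on_sub_linear a b g g' c Hd). fold G in HG.
  replace (bsub (bsub (g b') (g a')) (bscal (b' - a') c)) with (bsub (G b') (G a')) by (unfold G; vring).
  apply mean_value_ineq; auto.
  - eapply deriv_on_cont_on; eauto.
  - intros s Hs e He.
    destruct (deriv_on_linear_approx a b G _ s HG ltac:(lra) e He) as [eta [Heta H]].
    exists eta; split; auto. intros d Hd1 Hd2.
    specialize (H d ltac:(lra) ltac:(rewrite Rabs_pos_eq; lra) ltac:(lra)).
    rewrite Rabs_pos_eq in H by lra.
    replace (bsub (G (s + d)) (G s))
      with (badd (bsub (bsub (G (s + d)) (G s)) (bscal d (bsub (g' s) c))) (bscal d (bsub (g' s) c)))
      by vring.
    eapply Rle_trans; [apply bnorm_triangle|]. rewrite bnorm_scal, Rabs_pos_eq by lra.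
    specialize (HB s ltac:(lra)). nra.
Qed.

End MeanValue.

(** * Riemann integral *)

Lemma Rdiv_nonneg a b : 0 <= a -> 0 < b -> 0 <= a / b.
Proof. intros. apply Rmult_le_pos; auto. left; apply Rinv_0_lt_compat; auto. Qed.

Section Integral.
Context {V : Type} {BV : Banach V}.

Definition riemann_sum (g : R -> V) a b N :=
  bscal ((b - a) / INR N) (bsum N (fun i => g (a + INR i * (b - a) / INR N))).

Lemma bsum_sub N F G : bsub (bsum N F) (bsum N G) = bsum N (fun i => bsub (F i) (G i)).
Proof. induction N; simpl; [vring|]. rewrite <- IHN. vring. Qed.

Lemma bsum_const N (c : V) : bsum N (fun _ => c) = bscal (INR N) c.
Proof.
  induction N; simpl bsum; [rewrite bscal_0_l; auto|].
  rewrite IHN, S_INR, bscal_distr_s, bscal_1. auto.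
Qed.

Lemma bsum_norm_le N F B : (forall i, (i < N)%nat -> bnorm (F i) <= B) -> bnorm (bsum N F) <= INR N * B.
Proof.
  induction N; intros H; simpl bsum; [rewrite bnorm_zero; simpl; lra|].
  eapply Rle_trans; [apply bnorm_triangle|]. rewrite S_INR.
  assert (bnorm (bsum N F) <= INR N * B) by (apply IHN; intros; apply H; lia).
  specialize (H N ltac:(lia)). lra.
Qed.

Lemma bsum_telescope N (G : nat -> V) : bsum N (fun i => bsub (G (S i)) (G i)) = bsub (G N) (G O).
Proof. induction N; simpl; [vring|]. rewrite IHN. vring. Qed.

Lemma bsum_block N M G : bsum (N * M) G = bsum N (fun i => bsum M (fun l => G (i * M + l)%nat)).
Proof.
  assert (Hshift : forall n m, bsum (n + m) G = badd (bsum n G) (bsum m (fun l => G (n + l)%nat))).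
  { intros n m. induction m; simpl; [rewrite Nat.add_0_r, badd_0; auto|].
    rewrite Nat.add_succ_r. simpl bsum. rewrite IHm, badd_assoc. auto. }
  induction N; [reflexivity|]. replace (S N * M)%nat with (N * M + M)%nat by lia.
  rewrite Hshift, IHN. auto.
Qed.

Lemma riemann_node_in a b N i : a <= b -> (N > 0)%nat -> (i < N)%nat ->
  a <= a + INR i * (b - a) / INR N <= b.
Proof.
  intros Hab HN Hi. assert (0 < INR N) by (apply lt_0_INR; lia).
  assert (INR i + 1 <= INR N) by (rewrite <- S_INR; apply le_INR; lia).
  pose proof (pos_INR i). split.
  - assert (0 <= INR i * (b - a) / INR N) by (apply Rdiv_nonneg; nra). lra.
  - assert (INR i * (b - a) / INR N <= b - a).
    { apply (Rmult_le_reg_r (INR N)); auto. field_simplify; nra. }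
    lra.
Qed.

Lemma riemann_sum_norm_le g a b N B : a <= b -> (N > 0)%nat ->
  (forall s, a <= s <= b -> bnorm (g s) <= B) -> bnorm (riemann_sum g a b N) <= (b - a) * B.
Proof.
  intros Hab HN H. unfold riemann_sum. rewrite bnorm_scal.
  assert (0 < INR N) by (apply lt_0_INR; lia).
  rewrite Rabs_pos_eq by (apply Rdiv_nonneg; lra).
  assert (bnorm (bsum N (fun i => g (a + INR i * (b - a) / INR N))) <= INR N * B).
  { apply bsum_norm_le. intros. apply H. apply riemann_node_in; auto. }
  replace ((b - a) * B) with ((b - a) / INR N * (INR N * B)) by (field; lra).
  apply Rmult_le_compat_l; auto. apply Rdiv_nonneg; lra.
Qed.

Lemma is_RInt_unique g a b I J : is_RInt g a b I -> is_RInt g a b J -> I = J.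
Proof.
  intros H1 H2. apply bnorm_sub_le0. apply Rle_plus_epsilon. intros e He.
  destruct (H1 (e/2) ltac:(lra)) as [N1 HN1]. destruct (H2 (e/2) ltac:(lra)) as [N2 HN2].
  specialize (HN1 (S (N1 + N2)) ltac:(lia) ltac:(lia)). specialize (HN2 (S (N1 + N2)) ltac:(lia) ltac:(lia)).
  fold (riemann_sum g a b (S (N1 + N2))) in *.
  pose proof (bnorm_sub_triangle I (riemann_sum g a b (S (N1 + N2))) J). rewrite bnorm_sub_sym in HN1. lra.
Qed.

Lemma RInt_eq g a b I : is_RInt g a b I -> RInt g a b = I.
Proof. intros H. unfold RInt. apply (is_RInt_unique g a b); auto. apply epsilon_spec. eauto. Qed.

Lemma is_RInt_ext g h a b I : a <= b -> (forall s, a <= s <= b -> g s = h s) ->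
  is_RInt g a b I -> is_RInt h a b I.
Proof.
  intros Hab Hgh H e He. destruct (H e He) as [N0 HN0]. exists N0. intros N H1 H2.
  specialize (HN0 N H1 H2). fold (riemann_sum g a b N) in HN0. fold (riemann_sum h a b N).
  replace (riemann_sum h a b N) with (riemann_sum g a b N); auto.
  unfold riemann_sum. f_equal. apply bsum_ext. intros. apply Hgh. apply riemann_node_in; auto.
Qed.

Lemma is_RInt_add g h a b I J : is_RInt g a b I -> is_RInt h a b J ->
  is_RInt (fun s => badd (g s) (h s)) a b (badd I J).
Proof.
  intros H1 H2 e He. destruct (H1 (e/2) ltac:(lra)) as [N1 HN1]. destruct (H2 (e/2) ltac:(lra)) as [N2 HN2].
  exists (N1 + N2)%nat. intros N HN HN0.
  specialize (HN1 N ltac:(lia) HN0). specialize (HN2 N ltac:(lia) HN0).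
  fold (riemann_sum g a b N) in HN1. fold (riemann_sum h a b N) in HN2.
  fold (riemann_sum (fun s => badd (g s) (h s)) a b N).
  replace (riemann_sum (fun s => badd (g s) (h s)) a b N) with (badd (riemann_sum g a b N) (riemann_sum h a b N))
    by (unfold riemann_sum; rewrite bsum_add, bscal_distr_v; auto).
  replace (bsub (badd (riemann_sum g a b N) (riemann_sum h a b N)) (badd I J))
    with (badd (bsub (riemann_sum g a b N) I) (bsub (riemann_sum h a b N) J)) by vring.
  eapply Rle_lt_trans; [apply bnorm_triangle|]. lra.
Qed.

Lemma is_RInt_scal g c a b I : is_RInt g a b I -> is_RInt (fun s => bscal c (g s)) a b (bscal c I).
Proof.
  intros H e He. destruct (H (e / (Rabs c + 1))) as [N1 HN1].
  { apply Rdiv_lt_0_compat; auto. pose proof (Rabs_pos c); lra. }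
  exists N1. intros N HN HN0. specialize (HN1 N HN HN0). fold (riemann_sum g a b N) in HN1.
  fold (riemann_sum (fun s => bscal c (g s)) a b N).
  replace (riemann_sum (fun s => bscal c (g s)) a b N) with (bscal c (riemann_sum g a b N))
    by (unfold riemann_sum; rewrite bsum_scal, !bscal_assoc; f_equal; ring).
  replace (bsub (bscal c (riemann_sum g a b N)) (bscal c I)) with (bscal c (bsub (riemann_sum g a b N) I)) by vring.
  rewrite bnorm_scal. pose proof (Rabs_pos c).
  assert (e / (Rabs c + 1) * (Rabs c + 1) = e) by (field; lra).
  pose proof (bnorm_ge0 (bsub (riemann_sum g a b N) I)). nra.
Qed.

Lemma is_RInt_const c a b : is_RInt (fun _ => c) a b (bscal (b - a) c).
Proof.
  intros e He. exists 1%nat. intros N HN HN0. fold (riemann_sum (fun _ => c) a b N). unfold riemann_sum.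
  rewrite bsum_const, bscal_assoc. replace ((b - a) / INR N * INR N) with (b - a).
  - rewrite bnorm_sub_diag. lra.
  - field. apply not_0_INR. lia.
Qed.

Lemma is_RInt_norm_le g a b I B : a <= b -> is_RInt g a b I ->
  (forall s, a <= s <= b -> bnorm (g s) <= B) -> bnorm I <= (b - a) * B.
Proof.
  intros Hab H HB. apply Rle_plus_epsilon. intros e He. destruct (H e He) as [N0 HN0].
  specialize (HN0 (S N0) ltac:(lia) ltac:(lia)). fold (riemann_sum g a b (S N0)) in HN0.
  pose proof (riemann_sum_norm_le g a b (S N0) B Hab ltac:(lia) HB).
  pose proof (bnorm_sub_ge I (riemann_sum g a b (S N0))) as Hrev. rewrite bnorm_sub_sym in Hrev. lra.
Qed.

Lemma riemann_sum_refine g a b d e N M : a < b -> (N > 0)%nat -> (M > 0)%nat -> (b - a) / INR N <= d ->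
  (forall s t, a <= s <= b -> a <= t <= b -> Rabs (s - t) <= d -> bnorm (bsub (g s) (g t)) <= e) ->
  bnorm (bsub (riemann_sum g a b N) (riemann_sum g a b (N * M))) <= (b - a) * e.
Proof.
  intros Hab HN HM Hd Hg.
  assert (HNr : 0 < INR N) by (apply lt_0_INR; lia). assert (HMr : 0 < INR M) by (apply lt_0_INR; lia).
  set (c' := (b - a) / INR (N * M)).
  assert (Hc' : 0 < c') by (unfold c'; rewrite mult_INR; apply Rdiv_lt_0_compat; nra).
  set (p := fun i => a + INR i * (b - a) / INR N).
  set (q := fun i l => a + INR (i * M + l) * (b - a) / INR (N * M)).
  assert (E1 : riemann_sum g a b N = bscal c' (bsum N (fun i => bsum M (fun l => g (p i))))).
  { unfold riemann_sum.
    replace (bsum N (fun i => bsum M (fun _ => g (p i)))) with (bscal (INR M) (bsum N (fun i => g (p i)))).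
    - rewrite bscal_assoc. f_equal. unfold c'. rewrite mult_INR. field. lra.
    - rewrite <- bsum_scal. apply bsum_ext. intros. rewrite bsum_const. auto. }
  assert (E2 : riemann_sum g a b (N * M) = bscal c' (bsum N (fun i => bsum M (fun l => g (q i l)))))
    by (unfold riemann_sum; rewrite bsum_block; auto).
  rewrite E1, E2.
  replace (bsub (bscal c' (bsum N (fun i => bsum M (fun _ => g (p i)))))
              (bscal c' (bsum N (fun i => bsum M (fun l => g (q i l))))))
    with (bscal c' (bsub (bsum N (fun i => bsum M (fun _ => g (p i))))
                         (bsum N (fun i => bsum M (fun l => g (q i l)))))) by vring.
  rewrite bsum_sub, bnorm_scal, Rabs_pos_eq by lra.
  assert (bnorm (bsum N (fun i => bsub (bsum M (fun _ => g (p i))) (bsum M (fun l => g (q i l)))))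
          <= INR N * (INR M * e)).
  { apply bsum_norm_le. intros i Hi. rewrite bsum_sub. apply bsum_norm_le. intros l Hl.
    apply Hg.
    - apply riemann_node_in; lra || lia.
    - apply riemann_node_in; try lra; try nia.
    - unfold p, q. rewrite plus_INR, !mult_INR.
      replace (a + INR i * (b - a) / INR N - (a + (INR i * INR M + INR l) * (b - a) / (INR N * INR M)))
        with (- (INR l * (b - a) / (INR N * INR M))) by (field; lra).
      rewrite Rabs_Ropp. assert (INR l + 1 <= INR M) by (rewrite <- S_INR; apply le_INR; lia).
      pose proof (pos_INR l).
      rewrite Rabs_pos_eq by (apply Rdiv_nonneg; nra).
      apply Rle_trans with ((b - a) / INR N); auto.
      apply (Rmult_le_reg_r (INR N * INR M)); [nra|]. field_simplify; try lra. nra. }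
  replace ((b - a) * e) with (c' * (INR N * (INR M * e))) by (unfold c'; rewrite mult_INR; field; lra).
  apply Rmult_le_compat_l; lra.
Qed.

Lemma is_RInt_unif_cont g a b : a < b ->
  (forall e, e > 0 -> exists d, d > 0 /\ forall s t, a <= s <= b -> a <= t <= b ->
     Rabs (s - t) <= d -> bnorm (bsub (g s) (g t)) <= e) ->
  exists I, is_RInt g a b I.
Proof.
  intros Hab Huc.
  assert (Hcauchy : forall e, e > 0 -> exists N0, forall N N', (N >= N0)%nat -> (N' >= N0)%nat ->
     (N > 0)%nat -> (N' > 0)%nat -> bnorm (bsub (riemann_sum g a b N) (riemann_sum g a b N')) <= e).
  { intros e He. destruct (Huc (e / (2 * (b - a)))) as [d [Hd H]]; [apply Rdiv_lt_0_compat; lra|].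
    destruct (INR_unbounded ((b - a) / d)) as [N1 HN1].
    exists (S N1). intros N N' HN HN' HN0 HN'0.
    assert (Hmesh : forall K, (K >= S N1)%nat -> (b - a) / INR K <= d).
    { intros K HK. assert (INR N1 <= INR K) by (apply le_INR; lia).
      assert (0 < INR K) by (apply lt_0_INR; lia).
      apply (Rmult_le_reg_r (INR K)); auto. field_simplify; try lra.
      assert ((b - a) / d * d = b - a) by (field; lra). nra. }
    pose proof (riemann_sum_refine g a b d (e / (2 * (b - a))) N N' Hab HN0 HN'0 (Hmesh N HN) H).
    pose proof (riemann_sum_refine g a b d (e / (2 * (b - a))) N' N Hab HN'0 HN0 (Hmesh N' HN') H) as HN'N.
    rewrite Nat.mul_comm, bnorm_sub_sym in HN'N.
    pose proof (bnorm_sub_triangle (riemann_sum g a b N) (riemann_sum g a b (N * N')) (riemann_sum g a b N')).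
    assert ((b - a) * (e / (2 * (b - a))) = e / 2) by (field; lra). lra. }
  destruct (bcomplete (fun m => riemann_sum g a b (S m))) as [l Hl].
  { intros e He. destruct (Hcauchy (e/2) ltac:(lra)) as [N0 HN0]. exists N0. intros m n Hm Hn.
    specialize (HN0 (S m) (S n) ltac:(lia) ltac:(lia) ltac:(lia) ltac:(lia)). unfold bsub in HN0. lra. }
  exists l. intros e He. destruct (Hl e He) as [N0 HN0]. exists (S N0). intros N HN HN0'.
  specialize (HN0 (pred N) ltac:(lia)). replace (S (pred N)) with N in HN0 by lia. exact HN0.
Qed.

End Integral.

(** * Bounds on [a, b] and Taylor's formula *)

Lemma compact_local_to_global (a b : R) (Pr : R -> R -> Prop) : a <= b ->
  (forall t v v', Pr t v -> v <= v' -> Pr t v') ->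
  (forall c, a <= c <= b -> exists d, d > 0 /\ exists vc, forall t, a <= t <= b -> Rabs (t - c) < d -> Pr t vc) ->
  exists v, forall t, a <= t <= b -> Pr t v.
Proof.
  intros Hab Hmono Hloc.
  set (Q := fun x => exists v, forall t, a <= t <= x -> Pr t v).
  assert (Hjoin : forall x y vx vy, (forall t, a <= t <= x -> Pr t vx) ->
            (forall t, x < t <= y -> Pr t vy) -> Q y).
  { intros x y vx vy Hx Hy. exists (Rmax vx vy). intros t Ht. destruct (Rle_or_lt t x).
    - eapply Hmono; [apply Hx; lra|apply Rmax_l].
    - eapply Hmono; [apply Hy; lra|apply Rmax_r]. }
  enough (Q b) as [v Hv] by eauto.
  apply (continuous_induction Q a b Hab); [| | |lra].
  - destruct (Hloc a ltac:(lra)) as [d [Hd [va Hva]]]. exists va. intros t Ht.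
    apply Hva; [lra|]. replace (t - a) with 0 by lra. rewrite Rabs_R0; lra.
  - intros c Hc Hbelow. destruct (Hloc c ltac:(lra)) as [d [Hd [vc Hvc]]].
    set (y := Rmax a (c - d / 2)).
    assert (a <= y) by apply Rmax_l. assert (c - d / 2 <= y) by apply Rmax_r.
    assert (y < c) by (apply Rmax_lub_lt; lra).
    destruct (Hbelow y ltac:(lra)) as [vy Hvy].
    apply (Hjoin y c vy vc Hvy). intros t Ht. apply Hvc; [lra|]. apply Rabs_def1; lra.
  - intros c Hc Hupto. destruct (Hloc c ltac:(lra)) as [d [Hd [vc Hvc]]].
    destruct (Hupto c ltac:(lra)) as [vx Hvx].
    exists (d / 2). split; [lra|]. intros y Hy Hyb.
    apply (Hjoin c y vx vc Hvx). intros t Ht. apply Hvc; [lra|]. apply Rabs_def1; lra.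
Qed.

Section Bounds.
Context {V : Type} {BV : Banach V}.

Lemma cont_on_bounded a b (g : R -> V) : a <= b -> cont_on a b g ->
  exists B, forall t, a <= t <= b -> bnorm (g t) <= B.
Proof.
  intros Hab Hc. apply (compact_local_to_global a b (fun t v => bnorm (g t) <= v)); auto.
  - intros; lra.
  - intros c Hc'. destruct (Hc c Hc' 1 ltac:(lra)) as [d [Hd H]]. exists d. split; auto.
    exists (bnorm (g c) + 1). intros t Ht Htc. destruct (Req_dec t c) as [->|Hne]; [lra|].
    specialize (H t Ht Hne Htc). pose proof (bnorm_sub_ge (g t) (g c)). lra.
Qed.

Lemma deriv_on_unique a b (g g1 g2 : R -> V) t : a < b -> deriv_on a b g g1 -> deriv_on a b g g2 ->
  a <= t <= b -> g1 t = g2 t.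
Proof.
  intros Hab H1 H2 Ht. apply bnorm_sub_le0. apply Rle_plus_epsilon. intros e He. rewrite Rplus_0_l.
  destruct (H1 t Ht (e/2) ltac:(lra)) as [d1 [Hd1 K1]]. destruct (H2 t Ht (e/2) ltac:(lra)) as [d2 [Hd2 K2]].
  set (m := Rmin (Rmin d1 d2) (b - a) / 2).
  assert (Hmin : 0 < Rmin (Rmin d1 d2) (b - a)) by (repeat apply Rmin_glb_lt; lra).
  pose proof (Rmin_l (Rmin d1 d2) (b - a)). pose proof (Rmin_r (Rmin d1 d2) (b - a)).
  pose proof (Rmin_l d1 d2). pose proof (Rmin_r d1 d2).
  assert (Hdel : exists dl, dl <> 0 /\ Rabs dl = m /\ a <= t + dl <= b).
  { destruct (Rle_or_lt (t + m) b).
    - exists m. split; [unfold m; lra|]. split; [apply Rabs_pos_eq; unfold m; lra|unfold m in *; lra].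
    - exists (- m). split; [unfold m; lra|]. rewrite Rabs_Ropp.
      split; [apply Rabs_pos_eq; unfold m; lra|unfold m in *; lra]. }
  destruct Hdel as [dl [Hdl0 [Hdlm Hdom]]].
  specialize (K1 dl Hdom Hdl0 ltac:(rewrite Rminus_0_r; unfold m in *; lra)).
  specialize (K2 dl Hdom Hdl0 ltac:(rewrite Rminus_0_r; unfold m in *; lra)).
  pose proof (bnorm_sub_triangle (g1 t) (bscal (/ dl) (bsub (g (t + dl)) (g t))) (g2 t)).
  rewrite bnorm_sub_sym in K1. lra.
Qed.

Lemma C1_on_bounded a b (g : R -> V) : a <= b -> C1_on a b g ->
  exists B, forall t, a <= t <= b -> bnorm (g t) <= B.
Proof.
  intros Hab [g' [Hd Hc]]. destruct (cont_on_bounded a b g' Hab Hc) as [B HB].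
  assert (HB0 : 0 <= B) by (specialize (HB a ltac:(lra)); pose proof (bnorm_ge0 (g' a)); lra).
  exists (bnorm (g a) + B * (b - a)). intros t Ht.
  pose proof (deriv_mean_value_ineq a b g g' a t bzero B Hd ltac:(lra) ltac:(lra) ltac:(lra)) as H.
  replace (bsub (bsub (g t) (g a)) (bscal (t - a) bzero)) with (bsub (g t) (g a)) in H by vring.
  assert (bnorm (bsub (g t) (g a)) <= B * (t - a)).
  { apply H. intros s Hs. replace (bsub (g' s) bzero) with (g' s) by vring. apply HB. lra. }
  pose proof (bnorm_sub_ge (g t) (g a)). assert (B * (t - a) <= B * (b - a)) by nra. lra.
Qed.

Lemma deriv_on_taylor2 a b (g g1 g2 : R -> V) B t h : deriv_on a b g g1 -> deriv_on a b g1 g2 ->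
  (forall s, a <= s <= b -> bnorm (g2 s) <= B) -> a <= t -> 0 <= h -> t + h <= b ->
  bnorm (bsub (bsub (g (t + h)) (g t)) (bscal h (g1 t))) <= B * h ^ 2.
Proof.
  intros Hg Hg1 HB Ht Hh Hth.
  assert (Hg1L : forall s, t <= s <= t + h -> bnorm (bsub (g1 s) (g1 t)) <= B * h).
  { intros s Hs.
    pose proof (deriv_mean_value_ineq a b g1 g2 t s bzero B Hg1 ltac:(lra) ltac:(lra) ltac:(lra)) as H.
    replace (bsub (bsub (g1 s) (g1 t)) (bscal (s - t) bzero)) with (bsub (g1 s) (g1 t)) in H by vring.
    assert (bnorm (bsub (g1 s) (g1 t)) <= B * (s - t)).
    { apply H. intros r Hr. replace (bsub (g2 r) bzero) with (g2 r) by vring. apply HB. lra. }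
    assert (0 <= B) by (specialize (HB t ltac:(lra)); pose proof (bnorm_ge0 (g2 t)); lra). nra. }
  pose proof (deriv_mean_value_ineq a b g g1 t (t + h) (g1 t) (B * h) Hg ltac:(lra) ltac:(lra) ltac:(lra) Hg1L).
  replace (t + h - t) with h in H by ring. simpl. lra.
Qed.

Lemma C2_on_taylor a b (g g1 : R -> V) : a < b -> deriv_on a b g g1 -> C2_on a b g ->
  exists B, forall t h, a <= t -> 0 <= h -> t + h <= b ->
    bnorm (bsub (bsub (g (t + h)) (g t)) (bscal h (g1 t))) <= B * h ^ 2.
Proof.
  intros Hab Hg1 [g1' [Hg1' [g2 [Hg2 Hg2c]]]].
  destruct (cont_on_bounded a b g2 ltac:(lra) Hg2c) as [B HB].
  exists B. intros t h Ht Hh Hth.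
  rewrite <- (deriv_on_unique a b g g1' g1 t Hab Hg1' Hg1 ltac:(lra)).
  apply (deriv_on_taylor2 a b g g1' g2); auto.
Qed.

End Bounds.

(** * Semigroups and generalized solutions *)

Lemma negative_type_bounded {X} {BX : Banach X} (S : R -> X -> X) omega : negative_type S omega ->
  exists Ms, 0 <= Ms /\ forall t x, t >= 0 -> bnorm (S t x) <= Ms * bnorm x.
Proof.
  intros [Homega [M HM]]. exists (Rabs M). split; [apply Rabs_pos|]. intros t x Ht.
  assert (He : exp (omega * t) <= 1).
  { rewrite <- exp_0. destruct (Req_dec t 0) as [->|]; [rewrite Rmult_0_r; lra|].
    left. apply exp_increasing. nra. }
  pose proof (exp_pos (omega * t)). pose proof (bnorm_ge0 x). pose proof (Rle_abs M).
  pose proof (Rabs_pos M).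
  eapply Rle_trans; [apply HM; auto|].
  assert (M * exp (omega * t) <= Rabs M) by (destruct (Rle_or_lt 0 M); nra).
  nra.
Qed.

Section Subspace.
Context {X : Type} {BX : Banach X}.
Variable D : X -> Prop.
Hypothesis HD : subspace D.

Lemma subspace_add x y : D x -> D y -> D (badd x y).
Proof. intros Hx Hy. apply (proj2 HD x y 0 Hx Hy). Qed.

Lemma subspace_scal c x : D x -> D (bscal c x).
Proof. intros Hx. apply (proj2 HD x x c Hx Hx). Qed.

Lemma subspace_sub x y : D x -> D y -> D (bsub x y).
Proof. intros Hx Hy. unfold bsub. rewrite bopp_scal. apply subspace_add, subspace_scal; auto. Qed.

Lemma lin_on_add {W} {BW : Banach W} (L : X -> W) x y : lin_on D L -> D x -> D y ->
  L (badd x y) = badd (L x) (L y).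
Proof. intros HL Hx Hy. apply (HL x y 0 Hx Hy). Qed.

Lemma lin_on_scal {W} {BW : Banach W} (L : X -> W) c x : lin_on D L -> D x -> L (bscal c x) = bscal c (L x).
Proof. intros HL Hx. apply (HL x x c Hx Hx). Qed.

Lemma lin_on_sub {W} {BW : Banach W} (L : X -> W) x y : lin_on D L -> D x -> D y ->
  L (bsub x y) = bsub (L x) (L y).
Proof.
  intros HL Hx Hy. unfold bsub. rewrite !bopp_scal, lin_on_add, lin_on_scal; auto.
  apply subspace_scal; auto.
Qed.

End Subspace.

Section Semigroup.
Context {X : Type} {BX : Banach X}.
Variable S : R -> X -> X.
Variable Ms : R.
Hypothesis HMs : 0 <= Ms.
Hypothesis HSlin : forall t, t >= 0 -> lin_on (fun _ => True) (S t).
Hypothesis HSbd : forall t x, t >= 0 -> bnorm (S t x) <= Ms * bnorm x.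
Hypothesis HS0 : forall x, S 0 x = x.
Hypothesis HSadd : forall t s x, t >= 0 -> s >= 0 -> S (t + s) x = S t (S s x).
Hypothesis HScont : forall x, lim_in (fun t => t >= 0) (fun t => S t x) 0 x.

Lemma semigroup_add t x y : t >= 0 -> S t (badd x y) = badd (S t x) (S t y).
Proof. intros Ht. apply (HSlin t Ht x y 0 I I). Qed.

Lemma semigroup_scal t c x : t >= 0 -> S t (bscal c x) = bscal c (S t x).
Proof. intros Ht. apply (HSlin t Ht x x c I I). Qed.

Lemma semigroup_sub t x y : t >= 0 -> S t (bsub x y) = bsub (S t x) (S t y).
Proof.
  intros Ht. unfold bsub. rewrite !bopp_scal, semigroup_add, semigroup_scal by auto. auto.
Qed.

Lemma semigroup_orbit_unif_cont w k : forall e, e > 0 -> exists d, d > 0 /\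
  forall s t, 0 <= s <= k -> 0 <= t <= k -> Rabs (s - t) <= d -> bnorm (bsub (S s w) (S t w)) <= e.
Proof.
  intros e He.
  destruct (HScont w (e / (Ms + 1))) as [eta [Heta H]]; [apply Rdiv_lt_0_compat; lra|].
  exists (eta / 2). split; [lra|].
  assert (Key : forall s t, 0 <= s -> s <= t -> t - s < eta -> bnorm (bsub (S t w) (S s w)) <= e).
  { intros s t Hs Hst Hts. destruct (Req_dec s t) as [->|Hne]; [rewrite bnorm_sub_diag; lra|].
    replace (S t w) with (S s (S (t - s) w)) by (rewrite <- HSadd by lra; f_equal; ring).
    rewrite <- semigroup_sub by lra. eapply Rle_trans; [apply HSbd; lra|].
    specialize (H (t - s) ltac:(lra) ltac:(lra) ltac:(rewrite Rminus_0_r, Rabs_pos_eq; lra)).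
    assert (e / (Ms + 1) * (Ms + 1) = e) by (field; lra).
    pose proof (bnorm_ge0 (bsub (S (t - s) w) w)). nra. }
  intros s t Hs Ht Hst. destruct (Rle_or_lt s t).
  - rewrite bnorm_sub_sym. apply Key; try lra. rewrite Rabs_left1 in Hst; lra.
  - apply Key; try lra. rewrite Rabs_pos_eq in Hst; lra.
Qed.

Lemma semigroup_orbit_integrable w k : k > 0 -> exists I, is_RInt (fun s => S s w) 0 k I.
Proof. intros Hk. apply is_RInt_unif_cont; [lra|]. apply semigroup_orbit_unif_cont. Qed.

(* Telescoping [S k z - z] over the nodes [i h] compares it with the Riemann sum of [S s (A z)]. *)
Lemma riemann_sum_semigroup_quotient z Az k N : k > 0 -> (N > 0)%nat ->
  let h := k / INR N in
  bnorm (bsub (riemann_sum (fun s => S s Az) 0 k N) (bsub (S k z) z))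
    <= k * (Ms * bnorm (bsub (bscal (/ h) (bsub (S h z) z)) Az)).
Proof.
  intros Hk HN h.
  assert (HNr : 0 < INR N) by (apply lt_0_INR; lia).
  assert (Hh : 0 < h) by (unfold h; apply Rdiv_lt_0_compat; lra).
  set (r := bsub (bscal (/ h) (bsub (S h z) z)) Az).
  set (G := fun i => S (INR i * h) z).
  assert (Hnode : forall i, 0 <= INR i * h) by (intros i; pose proof (pos_INR i); nra).
  assert (HGN : G N = S k z) by (unfold G, h; f_equal; field; lra).
  assert (HG0 : G O = z) by (unfold G; simpl; rewrite Rmult_0_l; auto).
  replace (bsub (S k z) z) with (bsub (G N) (G O)) by (rewrite HGN, HG0; auto).
  rewrite <- bsum_telescope. unfold riemann_sum.
  replace ((k - 0) / INR N) with h by (unfold h; rewrite Rminus_0_r; reflexivity).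
  rewrite <- bsum_scal, bsum_sub.
  assert (Hterm : forall i, (i < N)%nat ->
     bsub (bscal h (S (0 + INR i * (k - 0) / INR N) Az)) (bsub (G (Datatypes.S i)) (G i))
     = bscal (- h) (S (INR i * h) r)).
  { intros i _. unfold G. rewrite S_INR.
    replace (0 + INR i * (k - 0) / INR N) with (INR i * h) by (unfold h; field; lra).
    replace ((INR i + 1) * h) with (INR i * h + h) by ring.
    pose proof (Hnode i). rewrite HSadd by lra.
    transitivity (bsub (bscal h (S (INR i * h) Az))
                       (bscal (h * / h) (bsub (S (INR i * h) (S h z)) (S (INR i * h) z)))).
    - rewrite Rinv_r, bscal_1 by lra. reflexivity.
    - unfold r. rewrite semigroup_sub, semigroup_scal, semigroup_sub by lra. vring. }
  rewrite (bsum_ext _ _ _ Hterm).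
  eapply Rle_trans; [apply (bsum_norm_le _ _ (h * (Ms * bnorm r)))|].
  - intros i _. rewrite bnorm_scal, Rabs_Ropp, Rabs_pos_eq by lra.
    apply Rmult_le_compat_l; [lra|]. apply HSbd. apply Rle_ge, Hnode.
  - right. unfold h. field. lra.
Qed.

Lemma is_RInt_semigroup_generator z Az k : k > 0 ->
  lim_in (fun h => h > 0) (fun h => bscal (/ h) (bsub (S h z) z)) 0 Az ->
  is_RInt (fun s => S s Az) 0 k (bsub (S k z) z).
Proof.
  intros Hk Hgen e He.
  destruct (Hgen (e / (k * Ms + 1))) as [eta [Heta H]]; [apply Rdiv_lt_0_compat; nra|].
  destruct (INR_unbounded (k / eta)) as [N0 HN0].
  exists (Datatypes.S N0). intros N HN HNp. fold (riemann_sum (fun s => S s Az) 0 k N).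
  assert (HNr : 0 < INR N) by (apply lt_0_INR; lia).
  assert (Hh : 0 < k / INR N) by (apply Rdiv_lt_0_compat; lra).
  assert (Hheta : k / INR N < eta).
  { assert (INR N0 <= INR N) by (apply le_INR; lia).
    apply (Rmult_lt_reg_r (INR N)); auto. field_simplify; try lra.
    assert (k / eta * eta = k) by (field; lra). nra. }
  specialize (H (k / INR N) ltac:(lra) ltac:(lra) ltac:(rewrite Rminus_0_r, Rabs_pos_eq; lra)).
  eapply Rle_lt_trans; [apply riemann_sum_semigroup_quotient; auto|].
  assert (e / (k * Ms + 1) * (k * Ms + 1) = e) by (field; nra).
  pose proof (bnorm_ge0 (bsub (bscal (/ (k / INR N)) (bsub (S (k / INR N) z) z)) Az)). nra.
Qed.

Lemma semigroup_sub_id_le z Az s : s >= 0 ->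
  lim_in (fun h => h > 0) (fun h => bscal (/ h) (bsub (S h z) z)) 0 Az ->
  bnorm (bsub (S s z) z) <= s * (Ms * bnorm Az).
Proof.
  intros Hs Hgen. destruct (Req_dec s 0) as [->|Hne]; [rewrite HS0, bnorm_sub_diag; lra|].
  assert (HI := is_RInt_semigroup_generator z Az s ltac:(lra) Hgen).
  assert (B := is_RInt_norm_le (fun t => S t Az) 0 s _ (Ms * bnorm Az) ltac:(lra) HI
     ltac:(intros t Ht; apply HSbd; lra)).
  rewrite Rminus_0_r in B. exact B.
Qed.

Lemma is_RInt_semigroup_sub_id q Aq k I : k > 0 ->
  lim_in (fun h => h > 0) (fun h => bscal (/ h) (bsub (S h q) q)) 0 Aq ->
  is_RInt (fun s => S s q) 0 k I -> bnorm (bsub I (bscal k q)) <= k ^ 2 * (Ms * bnorm Aq).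
Proof.
  intros Hk Hgen HI.
  assert (Hd := is_RInt_add _ _ _ _ _ _ HI (is_RInt_scal _ (-1) _ _ _ (is_RInt_const q 0 k))).
  assert (Hd' : is_RInt (fun s => bsub (S s q) q) 0 k (bsub I (bscal k q))).
  { replace (bsub I (bscal k q)) with (badd I (bscal (-1) (bscal (k - 0) q))) by vring.
    eapply is_RInt_ext; [lra| |apply Hd]. intros s Hs. simpl. vring. }
  eapply Rle_trans; [apply (is_RInt_norm_le _ 0 k _ (k * (Ms * bnorm Aq)) ltac:(lra) Hd')|].
  - intros s Hs. eapply Rle_trans; [apply (semigroup_sub_id_le q Aq s); auto; lra|].
    pose proof (bnorm_ge0 Aq). apply Rmult_le_compat_r; [nra|lra].
  - right. simpl. ring.
Qed.

Section GeneralizedSolution.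
Context {Y : Type} {BY : Banach Y}.
Variables (D : X -> Prop) (A : X -> X) (dA : X -> Y) (K0 : Y -> X).
Hypothesis HD : subspace D.
Hypothesis HA : lin_on D A.
Hypothesis HdA : lin_on D dA.
Hypothesis HK0 : forall v, D (K0 v) /\ A (K0 v) = bzero /\ dA (K0 v) = v.
Hypothesis HK0_uniq : forall x v, D x -> A x = bzero -> dA x = v -> x = K0 v.
Hypothesis Hgen : forall x, D x -> dA x = bzero ->
  lim_in (fun h => h > 0) (fun h => bscal (/ h) (bsub (S h x) x)) 0 (A x).

Lemma K0_affine v0 v1 c : K0 (badd v0 (bscal c v1)) = badd (K0 v0) (bscal c (K0 v1)).
Proof.
  destruct (HK0 v0) as [HD0 [HA0 HdA0]]. destruct (HK0 v1) as [HD1 [HA1 HdA1]].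
  symmetry. apply HK0_uniq.
  - apply subspace_add, subspace_scal; auto.
  - rewrite (lin_on_add D A), (lin_on_scal D A), HA0, HA1 by (auto; apply subspace_scal; auto). vring.
  - rewrite (lin_on_add D dA), (lin_on_scal D dA), HdA0, HdA1 by (auto; apply subspace_scal; auto). auto.
Qed.

Lemma lift_boundary_kernel x : D x -> D (bsub x (K0 (dA x))) /\ dA (bsub x (K0 (dA x))) = bzero /\
  A (bsub x (K0 (dA x))) = A x.
Proof.
  intros Hx. destruct (HK0 (dA x)) as [HDk [HAk HdAk]].
  split; [apply subspace_sub; auto|].
  rewrite (lin_on_sub D HD A), (lin_on_sub D HD dA), HAk, HdAk by auto. split; vring.
Qed.

(* Writing the data as [x0 = z + K0 (dA x0)], [a = q + K0 (dA a)] with [z, q] in the domain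
   of the generator, [S k z - z] is the integral of [S s (A x0)], which produces
   the decomposition below of the error against the affine function [x0 + s a]. *)
Lemma gen_sol_affine_decomp P x0 a k : k > 0 -> D x0 -> D a ->
  exists Iq Iw, is_RInt (fun s => S s (bsub a (K0 (dA a)))) 0 k Iq /\
    is_RInt (fun s => S s (bsub (A x0) a)) 0 k Iw /\
    bsub (gen_sol S K0 P (dA x0) (dA a) k) (badd x0 (bscal k a))
    = badd (badd (S k (bsub P x0)) (bsub Iq (bscal k (bsub a (K0 (dA a)))))) Iw.
Proof.
  intros Hk Hx0 Ha.
  set (y0 := K0 (dA x0)). set (y1 := K0 (dA a)).
  set (z := bsub x0 y0). set (q := bsub a y1). set (w := bsub (A x0) a).
  destruct (lift_boundary_kernel x0 Hx0) as [HDz [HdAz HAz]]. fold y0 z in HDz, HdAz, HAz.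
  destruct (semigroup_orbit_integrable y1 k Hk) as [Iy HIy].
  destruct (semigroup_orbit_integrable q k Hk) as [Iq HIq].
  destruct (semigroup_orbit_integrable w k Hk) as [Iw HIw].
  exists Iq, Iw. split; [auto|split; [auto|]].
  assert (HIz := is_RInt_semigroup_generator z (A z) k Hk (Hgen z HDz HdAz)).
  assert (Hsum : is_RInt (fun s => S s (A z)) 0 k (badd (badd Iq Iy) Iw)).
  { eapply is_RInt_ext; [lra| |apply (is_RInt_add _ _ _ _ _ _ (is_RInt_add _ _ _ _ _ _ HIq HIy) HIw)].
    intros s Hs. simpl. rewrite HAz. replace (A x0) with (badd (badd q y1) w) by (unfold q, w; vring).
    rewrite !semigroup_add by lra. auto. }
  assert (Hz := is_RInt_unique _ _ _ _ _ HIz Hsum).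
  unfold gen_sol. rewrite K0_affine. fold y0 y1. rewrite (RInt_eq _ _ _ _ HIy).
  replace (bsub P y0) with (badd (bsub P x0) z) by (unfold z; vring).
  rewrite semigroup_add by lra.
  replace (S k z) with (badd z (badd (badd Iq Iy) Iw)) by (rewrite <- Hz; vring).
  unfold z, q. vring.
Qed.

Lemma gen_sol_affine_error P x0 a k : k > 0 -> D x0 -> D a ->
  bnorm (bsub (gen_sol S K0 P (dA x0) (dA a) k) (badd x0 (bscal k a)))
    <= Ms * bnorm (bsub P x0) + k ^ 2 * (Ms * bnorm (A a)) + k * (Ms * bnorm (bsub (A x0) a)).
Proof.
  intros Hk Hx0 Ha.
  destruct (gen_sol_affine_decomp P x0 a k Hk Hx0 Ha) as [Iq [Iw [HIq [HIw ->]]]].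
  destruct (lift_boundary_kernel a Ha) as [HDq [HdAq HAq]].
  assert (Hq := is_RInt_semigroup_sub_id _ _ k Iq Hk (Hgen _ HDq HdAq) HIq). rewrite HAq in Hq.
  assert (Hw := is_RInt_norm_le _ 0 k Iw (Ms * bnorm (bsub (A x0) a)) ltac:(lra) HIw
                  ltac:(intros s Hs; apply HSbd; lra)).
  assert (HP := HSbd k (bsub P x0) ltac:(lra)).
  rewrite Rminus_0_r in Hw.
  eapply Rle_trans; [apply bnorm_triangle|].
  eapply Rle_trans; [apply Rplus_le_compat_r, bnorm_triangle|]. lra.
Qed.

End GeneralizedSolution.

End Semigroup.

(** * Local solutions of ODEs as limits of Euler polygons *)

Section EulerPolygon.
Context {V : Type} {BV : Banach V}.
Variable F : R -> V -> V.
Variables (x0 : V) (h rho M L d : R).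
Hypothesis Hd : d > 0.
Hypothesis HM : 0 <= M.
Hypothesis HL : 0 <= L.
Hypothesis HhM : h * M <= rho.
Hypothesis HFb : forall s x, 0 <= s <= h -> bnorm (bsub x x0) <= rho -> bnorm (F s x) <= M.
Hypothesis HFL : forall s1 x1 s2 x2, 0 <= s1 <= h -> bnorm (bsub x1 x0) <= rho ->
   0 <= s2 <= h -> bnorm (bsub x2 x0) <= rho ->
   bnorm (bsub (F s1 x1) (F s2 x2)) <= L * (Rabs (s1 - s2) + bnorm (bsub x1 x2)).

(* [euler m s0 y] is the Euler polygon with [m + 1] steps of length [d] started at [(s0, y)];
   beyond its last node it is continued linearly. *)
Fixpoint euler (m : nat) (s0 : R) (y : V) (s : R) : V :=
  match m with
  | O => badd y (bscal (s - s0) (F s0 y))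
  | S m' => if Rle_dec s (s0 + d) then badd y (bscal (s - s0) (F s0 y))
            else euler m' (s0 + d) (badd y (bscal d (F s0 y))) s
  end.

Definition euler_inv m s0 y := 0 <= s0 /\ s0 + INR (S m) * d = h /\ bnorm (bsub y x0) <= s0 * M.

Lemma euler_inv_le m s0 y : euler_inv m s0 y -> s0 + d <= h.
Proof. intros [H1 [H2 H3]]. rewrite S_INR in H2. pose proof (pos_INR m). nra. Qed.

Lemma euler_inv_slope m s0 y : euler_inv m s0 y -> bnorm (F s0 y) <= M.
Proof.
  intros Hi. pose proof (euler_inv_le _ _ _ Hi). destruct Hi as [H1 [H2 H3]].
  apply HFb; [lra|]. assert (s0 * M <= h * M) by (apply Rmult_le_compat_r; lra). lra.
Qed.

Lemma euler_inv_step m s0 y : euler_inv (S m) s0 y -> euler_inv m (s0 + d) (badd y (bscal d (F s0 y))).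
Proof.
  intros Hi. pose proof (euler_inv_slope _ _ _ Hi). destruct Hi as [H1 [H2 H3]]. split; [lra|split].
  - rewrite !S_INR in H2. rewrite S_INR. lra.
  - replace (bsub (badd y (bscal d (F s0 y))) x0) with (badd (bsub y x0) (bscal d (F s0 y))) by vring.
    eapply Rle_trans; [apply bnorm_triangle|]. rewrite bnorm_scal, Rabs_pos_eq by lra. nra.
Qed.

Lemma euler_start m s0 y : euler m s0 y s0 = y.
Proof.
  destruct m; simpl; [rewrite Rminus_diag, bscal_0_l, badd_0; auto|].
  destruct (Rle_dec s0 (s0 + d)); [rewrite Rminus_diag, bscal_0_l, badd_0; auto|lra].
Qed.

Lemma euler_step m s0 y t : t >= s0 + d ->
  euler (S m) s0 y t = euler m (s0 + d) (badd y (bscal d (F s0 y))) t.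
Proof.
  intros Ht. simpl. destruct (Rle_dec t (s0 + d)); auto.
  replace t with (s0 + d) by lra. rewrite euler_start. do 2 f_equal. ring.
Qed.

Lemma euler_first_segment m s0 y t : (m = O \/ t <= s0 + d) ->
  euler m s0 y t = badd y (bscal (t - s0) (F s0 y)).
Proof.
  intros [->|Ht]; [reflexivity|]. destruct m; [reflexivity|]. simpl.
  destruct (Rle_dec t (s0 + d)); auto. lra.
Qed.

Lemma euler_lipschitz m : forall s0 y, euler_inv m s0 y -> forall s t, s0 <= s -> s <= t -> t <= h ->
  bnorm (bsub (euler m s0 y t) (euler m s0 y s)) <= M * (t - s).
Proof.
  assert (Hseg : forall s0 y s t, bnorm (F s0 y) <= M -> s <= t ->
            bnorm (bsub (badd y (bscal (t - s0) (F s0 y))) (badd y (bscal (s - s0) (F s0 y)))) <= M * (t - s)).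
  { intros s0 y s t HF Hst.
    replace (bsub (badd y (bscal (t - s0) (F s0 y))) (badd y (bscal (s - s0) (F s0 y))))
      with (bscal (t - s) (F s0 y)) by vring. rewrite bnorm_scal, Rabs_pos_eq by lra. nra. }
  induction m as [|m IH]; intros s0 y Hi s t Hs Hst Hth; pose proof (euler_inv_slope _ _ _ Hi) as HF.
  - rewrite !euler_first_segment by auto. auto.
  - destruct (Rle_or_lt t (s0 + d)).
    + rewrite !euler_first_segment by (right; lra). auto.
    + pose proof (euler_inv_step _ _ _ Hi) as Hi'.
      destruct (Rle_or_lt (s0 + d) s); [rewrite !euler_step by lra; apply IH; auto|].
      rewrite (euler_step m s0 y t), (euler_first_segment _ s0 y s) by (lra || (right; lra)).
      set (y' := badd y (bscal d (F s0 y))).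
      pose proof (IH (s0 + d) y' Hi' (s0 + d) t ltac:(lra) ltac:(lra) Hth) as H1.
      rewrite euler_start in H1.
      pose proof (Hseg s0 y s (s0 + d) HF ltac:(lra)) as H2.
      replace (badd y (bscal (s0 + d - s0) (F s0 y))) with y' in H2 by (unfold y'; do 3 f_equal; ring).
      pose proof (bnorm_sub_triangle (euler m (s0 + d) y' t) y' (badd y (bscal (s - s0) (F s0 y)))). nra.
Qed.

Lemma euler_ball m s0 y s : euler_inv m s0 y -> s0 <= s <= h -> bnorm (bsub (euler m s0 y s) x0) <= s * M.
Proof.
  intros Hi Hs. pose proof (euler_lipschitz m s0 y Hi s0 s ltac:(lra) ltac:(lra) ltac:(lra)) as H.
  rewrite euler_start in H. destruct Hi as [_ [_ H3]].
  pose proof (bnorm_sub_triangle (euler m s0 y s) y x0). nra.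
Qed.

Lemma euler_first_segment_defect m s0 y s dl : euler_inv m s0 y -> s0 <= s -> 0 < dl ->
  s + dl <= s0 + d ->
  bnorm (bsub (bsub (euler m s0 y (s + dl)) (euler m s0 y s)) (bscal dl (F s (euler m s0 y s))))
    <= dl * (L * d * (1 + M)).
Proof.
  intros Hi Hs Hdl Hsd. pose proof (euler_inv_le _ _ _ Hi). pose proof (euler_inv_slope _ _ _ Hi) as HF.
  assert (Hb := euler_ball _ _ _ s Hi ltac:(lra)).
  rewrite !euler_first_segment in * by (right; lra).
  replace (bsub (bsub (badd y (bscal (s + dl - s0) (F s0 y))) (badd y (bscal (s - s0) (F s0 y))))
             (bscal dl (F s (badd y (bscal (s - s0) (F s0 y))))))
    with (bscal dl (bsub (F s0 y) (F s (badd y (bscal (s - s0) (F s0 y)))))) by vring.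
  rewrite bnorm_scal, Rabs_pos_eq by lra. apply Rmult_le_compat_l; [lra|].
  destruct Hi as [H1 [H2 H3]].
  eapply Rle_trans; [apply HFL; try lra|].
  - assert (s0 * M <= h * M) by (apply Rmult_le_compat_r; lra). lra.
  - assert (s * M <= h * M) by (apply Rmult_le_compat_r; lra). lra.
  - replace (bsub y (badd y (bscal (s - s0) (F s0 y)))) with (bscal (-(s - s0)) (F s0 y)) by vring.
    rewrite bnorm_scal, Rabs_Ropp, (Rabs_pos_eq (s - s0)), (Rabs_left1 (s0 - s)) by lra.
    assert ((s - s0) * bnorm (F s0 y) <= d * M) by (apply Rmult_le_compat; try lra; apply bnorm_ge0).
    nra.
Qed.

Lemma euler_defect m : forall s0 y, euler_inv m s0 y -> forall s, s0 <= s < h ->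
  exists eta, eta > 0 /\ forall dl, 0 < dl < eta -> s + dl <= h ->
   bnorm (bsub (bsub (euler m s0 y (s + dl)) (euler m s0 y s)) (bscal dl (F s (euler m s0 y s))))
     <= dl * (L * d * (1 + M)).
Proof.
  induction m as [|m IH]; intros s0 y Hi s Hs.
  - assert (s < s0 + d) by (destruct Hi as [_ [H2 _]]; simpl in H2; lra).
    exists (s0 + d - s). split; [lra|]. intros dl Hdl _.
    apply euler_first_segment_defect; auto; lra.
  - destruct (Rlt_or_le s (s0 + d)) as [Hsd|Hsd].
    + exists (s0 + d - s). split; [lra|]. intros dl Hdl _.
      apply euler_first_segment_defect; auto; lra.
    + destruct (IH _ _ (euler_inv_step _ _ _ Hi) s ltac:(lra)) as [eta [Heta H]].
      exists eta. split; auto. intros dl Hdl Hdh. rewrite !euler_step by lra. apply H; auto.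
Qed.

End EulerPolygon.

Section PeanoPicard.
Context {V : Type} {BV : Banach V}.
Variable F : R -> V -> V.
Variables (x0 : V) (h rho M L : R).
Hypothesis Hh : h > 0.
Hypothesis HM : 0 <= M.
Hypothesis HL : 0 <= L.
Hypothesis HhM : h * M <= rho.
Hypothesis HhL : h * L <= 1/2.
Hypothesis HFb : forall s x, 0 <= s <= h -> bnorm (bsub x x0) <= rho -> bnorm (F s x) <= M.
Hypothesis HFL : forall s1 x1 s2 x2, 0 <= s1 <= h -> bnorm (bsub x1 x0) <= rho ->
   0 <= s2 <= h -> bnorm (bsub x2 x0) <= rho ->
   bnorm (bsub (F s1 x1) (F s2 x2)) <= L * (Rabs (s1 - s2) + bnorm (bsub x1 x2)).

Definition euler_approx m s := euler F (h / INR (S m)) m 0 x0 s.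

Definition euler_err m := L * (h / INR (S m)) * (1 + M).

Lemma euler_approx_inv m : euler_inv x0 h M (h / INR (S m)) m 0 x0.
Proof.
  split; [lra|split]; [field; apply not_0_INR; lia|]. rewrite bnorm_sub_diag. lra.
Qed.

Lemma euler_step_pos m : h / INR (S m) > 0.
Proof. apply Rdiv_lt_0_compat; auto. apply lt_0_INR; lia. Qed.

Lemma euler_err_ge0 m : 0 <= euler_err m.
Proof. unfold euler_err. pose proof (euler_step_pos m). apply Rmult_le_pos; [apply Rmult_le_pos|]; lra. Qed.

Lemma drift_le_radius s : 0 <= s <= h -> s * M <= rho.
Proof. intros. assert (s * M <= h * M) by (apply Rmult_le_compat_r; lra). lra. Qed.

Lemma euler_approx_lipschitz m s t : 0 <= s -> s <= t -> t <= h ->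
  bnorm (bsub (euler_approx m t) (euler_approx m s)) <= M * (t - s).
Proof. intros. eapply euler_lipschitz; eauto using euler_step_pos, euler_approx_inv. Qed.

Lemma euler_approx_ball m s : 0 <= s <= h -> bnorm (bsub (euler_approx m s) x0) <= s * M.
Proof. intros. eapply euler_ball; eauto using euler_step_pos, euler_approx_inv; lra. Qed.

Lemma euler_approx_0 m : euler_approx m 0 = x0.
Proof. apply euler_start. apply euler_step_pos. Qed.

Lemma euler_approx_defect m s : 0 <= s < h ->
  exists eta, eta > 0 /\ forall dl, 0 < dl < eta -> s + dl <= h ->
   bnorm (bsub (bsub (euler_approx m (s + dl)) (euler_approx m s)) (bscal dl (F s (euler_approx m s))))
     <= dl * euler_err m.
Proof. intros. eapply euler_defect; eauto using euler_step_pos, euler_approx_inv; lra. Qed.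

Lemma F_euler_approx_lipschitz m n t : 0 <= t <= h ->
  bnorm (bsub (F t (euler_approx m t)) (F t (euler_approx n t)))
    <= L * bnorm (bsub (euler_approx m t) (euler_approx n t)).
Proof.
  intros Ht. pose proof (drift_le_radius t Ht).
  pose proof (euler_approx_ball m t Ht). pose proof (euler_approx_ball n t Ht).
  eapply Rle_trans; [apply HFL; lra|]. rewrite Rminus_diag, Rabs_R0, Rplus_0_l. lra.
Qed.

Lemma euler_approx_diff_growth m n E s : 0 <= E ->
  (forall t, 0 <= t <= h -> bnorm (bsub (euler_approx m t) (euler_approx n t)) <= E) -> 0 <= s <= h ->
  bnorm (bsub (euler_approx m s) (euler_approx n s)) <= (euler_err m + euler_err n + L * E) * s.
Proof.
  intros HE HEb Hs. set (B := euler_err m + euler_err n + L * E).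
  assert (HB : 0 <= B) by (unfold B; pose proof (euler_err_ge0 m); pose proof (euler_err_ge0 n); nra).
  pose proof (mean_value_ineq_right (fun t => bsub (euler_approx m t) (euler_approx n t)) 0 s B
                ltac:(lra) HB) as HMV.
  simpl in HMV. rewrite !euler_approx_0, Rminus_0_r in HMV.
  replace (bsub (bsub (euler_approx m s) (euler_approx n s)) (bsub x0 x0))
    with (bsub (euler_approx m s) (euler_approx n s)) in HMV by vring.
  apply HMV.
  - apply (lipschitz_cont_on _ _ _ (2 * M)); [lra|]. intros a b Ha Hab Hb.
    replace (bsub (bsub (euler_approx m b) (euler_approx n b)) (bsub (euler_approx m a) (euler_approx n a)))
      with (bsub (bsub (euler_approx m b) (euler_approx m a)) (bsub (euler_approx n b) (euler_approx n a))) by vring.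
    eapply Rle_trans; [apply bnorm_sub_le|].
    pose proof (euler_approx_lipschitz m a b Ha Hab ltac:(lra)).
    pose proof (euler_approx_lipschitz n a b Ha Hab ltac:(lra)). lra.
  - intros t Ht. destruct (euler_approx_defect m t ltac:(lra)) as [e1 [He1 H1]].
    destruct (euler_approx_defect n t ltac:(lra)) as [e2 [He2 H2]].
    exists (Rmin e1 e2). split; [apply Rmin_glb_lt; auto|]. intros dl Hdl Hdh.
    assert (dl < e1) by (eapply Rlt_le_trans; [apply Hdl|apply Rmin_l]).
    assert (dl < e2) by (eapply Rlt_le_trans; [apply Hdl|apply Rmin_r]).
    specialize (H1 dl ltac:(lra) ltac:(lra)). specialize (H2 dl ltac:(lra) ltac:(lra)).
    replace (bsub (bsub (euler_approx m (t + dl)) (euler_approx n (t + dl))) (bsub (euler_approx m t) (euler_approx n t)))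
      with (badd (bsub (bsub (bsub (euler_approx m (t + dl)) (euler_approx m t)) (bscal dl (F t (euler_approx m t))))
                       (bsub (bsub (euler_approx n (t + dl)) (euler_approx n t)) (bscal dl (F t (euler_approx n t)))))
                 (bscal dl (bsub (F t (euler_approx m t)) (F t (euler_approx n t))))) by vring.
    eapply Rle_trans; [apply bnorm_triangle|].
    eapply Rle_trans; [apply Rplus_le_compat_r, bnorm_sub_le|].
    rewrite bnorm_scal, Rabs_pos_eq by lra.
    pose proof (F_euler_approx_lipschitz m n t ltac:(lra)).
    pose proof (HEb t ltac:(lra)).
    assert (bnorm (bsub (F t (euler_approx m t)) (F t (euler_approx n t))) <= L * E) by nra.
    unfold B. nra.
Qed.

(* Since [h L <= 1/2], the sup [E] of the distance between two polygons satisfies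
   [E <= h (err m + err n) + E / 2]. *)
Lemma euler_approx_cauchy m n s : 0 <= s <= h ->
  bnorm (bsub (euler_approx m s) (euler_approx n s)) <= 2 * h * (euler_err m + euler_err n).
Proof.
  intros Hs.
  set (E := fun r => exists s, 0 <= s <= h /\ r = bnorm (bsub (euler_approx m s) (euler_approx n s))).
  assert (HEb : bound E).
  { exists (2 * rho). intros r [s' [Hs' ->]].
    pose proof (euler_approx_ball m s' Hs'). pose proof (euler_approx_ball n s' Hs').
    pose proof (drift_le_radius s' Hs').
    pose proof (bnorm_sub_triangle (euler_approx m s') x0 (euler_approx n s')).
    rewrite (bnorm_sub_sym x0) in H2. lra. }
  assert (HE0 : E 0) by (exists 0; split; [lra|]; rewrite !euler_approx_0, bnorm_sub_diag; auto).
  destruct (completeness E HEb (ex_intro _ _ HE0)) as [Es [Hub Hlub]].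
  assert (HEs0 : 0 <= Es) by (apply Hub; auto).
  assert (Hsup : forall t, 0 <= t <= h -> bnorm (bsub (euler_approx m t) (euler_approx n t)) <= Es)
    by (intros t Ht; apply Hub; exists t; auto).
  assert (HEs : Es <= h * (euler_err m + euler_err n + L * Es)).
  { apply Hlub. intros r [s' [Hs' ->]].
    eapply Rle_trans; [apply (euler_approx_diff_growth m n Es s' HEs0 Hsup Hs')|].
    pose proof (euler_err_ge0 m). pose proof (euler_err_ge0 n).
    rewrite (Rmult_comm h). apply Rmult_le_compat_l; [nra|lra]. }
  pose proof (Hsup s Hs). nra.
Qed.

Lemma euler_err_small e : e > 0 -> exists N, forall m, (m >= N)%nat -> euler_err m <= e.
Proof.
  intros He. destruct (INR_unbounded (L * h * (1 + M) / e)) as [N HN]. exists N. intros m Hm.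
  unfold euler_err. assert (INR N <= INR m) by (apply le_INR; lia). rewrite S_INR.
  assert (0 < INR m + 1) by (pose proof (pos_INR m); lra).
  replace (L * (h / (INR m + 1)) * (1 + M)) with (L * h * (1 + M) / (INR m + 1)) by (field; lra).
  apply (Rmult_le_reg_r (INR m + 1)); auto. field_simplify; try lra.
  assert (L * h * (1 + M) / e * e = L * h * (1 + M)) by (field; lra). nra.
Qed.

Definition euler_limit s := epsilon (inhabits x0) (fun l => forall e, e > 0 ->
  exists N, forall m, (m >= N)%nat -> bnorm (bsub (euler_approx m s) l) < e).

Lemma euler_limit_spec s : 0 <= s <= h -> forall e, e > 0 ->
  exists N, forall m, (m >= N)%nat -> bnorm (bsub (euler_approx m s) (euler_limit s)) < e.
Proof.
  intros Hs. unfold euler_limit. apply epsilon_spec.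
  destruct (bcomplete (fun m => euler_approx m s)) as [l Hl]; [|eauto].
  intros e He. destruct (euler_err_small (e / (8 * h))) as [N HN]; [apply Rdiv_lt_0_compat; lra|].
  exists N. intros m n Hm Hn. pose proof (euler_approx_cauchy m n s Hs).
  pose proof (HN m Hm). pose proof (HN n Hn).
  assert (2 * h * (e / (8 * h) + e / (8 * h)) = e / 2) by (field; lra).
  unfold bsub in H. nra.
Qed.

Lemma euler_limit_approx m s : 0 <= s <= h ->
  bnorm (bsub (euler_approx m s) (euler_limit s)) <= 2 * h * euler_err m.
Proof.
  intros Hs. apply Rle_plus_epsilon. intros e He.
  destruct (euler_limit_spec s Hs (e / 2) ltac:(lra)) as [N1 HN1].
  destruct (euler_err_small (e / (4 * h))) as [N2 HN2]; [apply Rdiv_lt_0_compat; lra|].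
  specialize (HN1 (N1 + N2)%nat ltac:(lia)). specialize (HN2 (N1 + N2)%nat ltac:(lia)).
  pose proof (euler_approx_cauchy m (N1 + N2) s Hs).
  pose proof (bnorm_sub_triangle (euler_approx m s) (euler_approx (N1 + N2) s) (euler_limit s)).
  assert (2 * h * (e / (4 * h)) = e / 2) by (field; lra). nra.
Qed.

Lemma le0_of_le_euler_err a c : (forall m, a <= c * euler_err m) -> 0 <= c -> a <= 0.
Proof.
  intros H Hc. apply Rle_plus_epsilon. intros e He. rewrite Rplus_0_l.
  destruct (euler_err_small (e / (c + 1))) as [N HN]; [apply Rdiv_lt_0_compat; lra|].
  specialize (H N). specialize (HN N ltac:(lia)). pose proof (euler_err_ge0 N).
  assert (c * (e / (c + 1)) <= e) by (apply (Rmult_le_reg_r (c + 1)); [lra|]; field_simplify; nra).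
  nra.
Qed.

Lemma euler_limit_0 : euler_limit 0 = x0.
Proof.
  apply bnorm_sub_le0. apply (le0_of_le_euler_err _ (2 * h)); [|lra]. intros m.
  pose proof (euler_limit_approx m 0 ltac:(lra)) as H. rewrite euler_approx_0 in H.
  rewrite bnorm_sub_sym. lra.
Qed.

Lemma euler_limit_lipschitz s t : 0 <= s -> s <= t -> t <= h ->
  bnorm (bsub (euler_limit t) (euler_limit s)) <= M * (t - s).
Proof.
  intros Hs Hst Ht. assert (bnorm (bsub (euler_limit t) (euler_limit s)) - M * (t - s) <= 0); [|lra].
  apply (le0_of_le_euler_err _ (4 * h)); [|lra]. intros m.
  pose proof (euler_limit_approx m t ltac:(lra)) as H1. pose proof (euler_limit_approx m s ltac:(lra)) as H2.
  pose proof (euler_approx_lipschitz m s t Hs Hst Ht) as H3.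
  pose proof (bnorm_sub_triangle (euler_limit t) (euler_approx m t) (euler_limit s)).
  pose proof (bnorm_sub_triangle (euler_approx m t) (euler_approx m s) (euler_limit s)).
  rewrite bnorm_sub_sym in H1. lra.
Qed.

Lemma euler_limit_ball s : 0 <= s <= h -> bnorm (bsub (euler_limit s) x0) <= s * M.
Proof.
  intros Hs. pose proof (euler_limit_lipschitz 0 s ltac:(lra) ltac:(lra) ltac:(lra)) as H.
  rewrite euler_limit_0 in H. lra.
Qed.

Lemma euler_approx_tangent_defect m a b s c : 0 <= a -> a <= s -> s <= b -> b <= h ->
  c = F s (euler_limit s) ->
  bnorm (bsub (bsub (euler_approx m b) (euler_approx m a)) (bscal (b - a) c))
    <= (euler_err m + L * ((b - a) + 2 * h * euler_err m + M * (b - a))) * (b - a).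
Proof.
  intros Ha Has Hsb Hb Hc. set (w := b - a).
  set (Bm := euler_err m + L * (w + 2 * h * euler_err m + M * w)).
  assert (HBm : 0 <= Bm).
  { unfold Bm. pose proof (euler_err_ge0 m). assert (0 <= w) by (unfold w; lra).
    apply Rplus_le_le_0_compat; [lra|]. apply Rmult_le_pos; [lra|]. nra. }
  replace (bsub (bsub (euler_approx m b) (euler_approx m a)) (bscal w c))
    with (bsub (bsub (euler_approx m b) (bscal b c)) (bsub (euler_approx m a) (bscal a c))) by (unfold w; vring).
  apply (mean_value_ineq_right (fun t => bsub (euler_approx m t) (bscal t c))); [lra|auto| |].
  - apply (lipschitz_cont_on _ _ _ (M + bnorm c)); [pose proof (bnorm_ge0 c); lra|].
    intros x y Hx Hxy Hy.
    replace (bsub (bsub (euler_approx m y) (bscal y c)) (bsub (euler_approx m x) (bscal x c)))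
      with (bsub (bsub (euler_approx m y) (euler_approx m x)) (bscal (y - x) c)) by vring.
    eapply Rle_trans; [apply bnorm_sub_le|]. rewrite bnorm_scal, Rabs_pos_eq by lra.
    pose proof (euler_approx_lipschitz m x y ltac:(lra) Hxy ltac:(lra)). lra.
  - intros t Ht. destruct (euler_approx_defect m t ltac:(lra)) as [e1 [He1 H1]].
    exists e1. split; auto. intros dl Hdl Hdb. specialize (H1 dl Hdl ltac:(lra)).
    replace (bsub (bsub (euler_approx m (t + dl)) (bscal (t + dl) c)) (bsub (euler_approx m t) (bscal t c)))
      with (badd (bsub (bsub (euler_approx m (t + dl)) (euler_approx m t)) (bscal dl (F t (euler_approx m t))))
                 (bscal dl (bsub (F t (euler_approx m t)) c))) by vring.
    eapply Rle_trans; [apply bnorm_triangle|]. rewrite bnorm_scal, Rabs_pos_eq by lra.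
    assert (bnorm (bsub (F t (euler_approx m t)) c) <= L * (w + 2 * h * euler_err m + M * w)).
    { subst c. eapply Rle_trans; [apply HFL; try lra|].
      - pose proof (euler_approx_ball m t ltac:(lra)). pose proof (drift_le_radius t ltac:(lra)). lra.
      - pose proof (euler_limit_ball s ltac:(lra)). pose proof (drift_le_radius s ltac:(lra)). lra.
      - apply Rmult_le_compat_l; auto.
        assert (Rabs (t - s) <= w) by (unfold w; apply Rabs_le; lra).
        pose proof (bnorm_sub_triangle (euler_approx m t) (euler_limit t) (euler_limit s)).
        pose proof (euler_limit_approx m t ltac:(lra)).
        destruct (Rle_or_lt t s).
        + pose proof (euler_limit_lipschitz t s ltac:(lra) ltac:(lra) ltac:(lra)) as Hl.
          rewrite bnorm_sub_sym in Hl. assert (M * (s - t) <= M * w) by (unfold w; nra). lra.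
        + pose proof (euler_limit_lipschitz s t ltac:(lra) ltac:(lra) ltac:(lra)).
          assert (M * (t - s) <= M * w) by (unfold w; nra). lra. }
    unfold Bm. nra.
Qed.

Lemma euler_limit_tangent a b s : 0 <= a -> a <= s -> s <= b -> b <= h ->
  bnorm (bsub (bsub (euler_limit b) (euler_limit a)) (bscal (b - a) (F s (euler_limit s))))
    <= L * (1 + M) * (b - a) ^ 2.
Proof.
  intros Ha Has Hsb Hb. set (w := b - a). set (c := F s (euler_limit s)).
  assert (bnorm (bsub (bsub (euler_limit b) (euler_limit a)) (bscal w c)) - L * (1 + M) * w ^ 2 <= 0); [|lra].
  apply (le0_of_le_euler_err _ (w + 2 * h * L * w + 4 * h)); [|unfold w; nra]. intros m.
  pose proof (euler_approx_tangent_defect m a b s c Ha Has Hsb Hb eq_refl) as HG. fold w in HG.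
  pose proof (bnorm_sub_triangle (bsub (euler_limit b) (euler_limit a))
                (bsub (euler_approx m b) (euler_approx m a)) (bscal w c)).
  replace (bsub (bsub (euler_limit b) (euler_limit a)) (bsub (euler_approx m b) (euler_approx m a)))
    with (badd (bsub (euler_limit b) (euler_approx m b)) (bsub (euler_approx m a) (euler_limit a))) in H by vring.
  pose proof (bnorm_triangle (bsub (euler_limit b) (euler_approx m b)) (bsub (euler_approx m a) (euler_limit a))).
  pose proof (euler_limit_approx m b ltac:(lra)). pose proof (euler_limit_approx m a ltac:(lra)).
  rewrite bnorm_sub_sym in H1.
  assert (Hw : 0 <= w) by (unfold w; lra). pose proof (euler_err_ge0 m).
  nra.
Qed.

Lemma ode_local_solution : exists z : R -> V, z 0 = x0 /\ deriv_on 0 h z (fun s => F s (z s)) /\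
  (forall s, 0 <= s <= h -> bnorm (bsub (bsub (z s) x0) (bscal s (F 0 x0))) <= L * (1 + M) * s ^ 2).
Proof.
  exists euler_limit. split; [apply euler_limit_0|split].
  - intros t Ht e He. set (K := L * (1 + M)).
    assert (HK : 0 <= K) by (unfold K; nra).
    exists (e / (K + 1)). split; [apply Rdiv_lt_0_compat; lra|].
    intros dl Hdom Hne Hdl. rewrite Rminus_0_r in Hdl.
    set (c := F t (euler_limit t)).
    assert (E : bsub (bscal (/ dl) (bsub (euler_limit (t + dl)) (euler_limit t))) c =
                bscal (/ dl) (bsub (bsub (euler_limit (t + dl)) (euler_limit t)) (bscal dl c))).
    { transitivity (bsub (bscal (/ dl) (bsub (euler_limit (t + dl)) (euler_limit t))) (bscal (/ dl * dl) c)).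
      - rewrite Rinv_l, bscal_1 by auto. auto.
      - vring. }
    rewrite E, bnorm_scal.
    assert (Hb : bnorm (bsub (bsub (euler_limit (t + dl)) (euler_limit t)) (bscal dl c)) <= K * dl ^ 2).
    { destruct (Rlt_or_le 0 dl).
      - pose proof (euler_limit_tangent t (t + dl) t ltac:(lra) ltac:(lra) ltac:(lra) ltac:(lra)) as H0.
        replace (t + dl - t) with dl in H0 by ring. exact H0.
      - pose proof (euler_limit_tangent (t + dl) t t ltac:(lra) ltac:(lra) ltac:(lra) ltac:(lra)) as H0.
        replace (bsub (bsub (euler_limit (t + dl)) (euler_limit t)) (bscal dl c))
          with (bopp (bsub (bsub (euler_limit t) (euler_limit (t + dl))) (bscal (t - (t + dl)) c))) by vring.
        rewrite bnorm_opp. replace ((t - (t + dl)) ^ 2) with (dl ^ 2) in H0 by ring. exact H0. }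
    rewrite Rabs_inv. assert (0 < Rabs dl) by (apply Rabs_pos_lt; auto).
    replace (dl ^ 2) with (Rabs dl * Rabs dl) in Hb by (rewrite <- Rabs_mult, Rabs_pos_eq; [ring|nra]).
    apply (Rmult_lt_reg_l (Rabs dl)); auto. rewrite <- Rmult_assoc, Rinv_r, Rmult_1_l by lra.
    assert (e / (K + 1) * (K + 1) = e) by (field; lra).
    assert (K * Rabs dl < e) by (apply (Rmult_lt_compat_r (K + 1)) in Hdl; nra). nra.
  - intros s Hs. pose proof (euler_limit_tangent 0 s 0 ltac:(lra) ltac:(lra) ltac:(lra) ltac:(lra)) as H.
    rewrite euler_limit_0, Rminus_0_r in H. exact H.
Qed.

End PeanoPicard.

(** * Regularity of f near the graph of u *)

Definition tube_lipschitz {X} {BX : Banach X} (T : R) (f : R -> X -> X) (u : R -> X) (r M L : R) : Prop :=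
  forall tau t1 x1 t2 x2, 0 <= tau <= T -> 0 <= t1 <= T -> 0 <= t2 <= T ->
    Rabs (t1 - tau) + bnorm (bsub x1 (u tau)) < r -> Rabs (t2 - tau) + bnorm (bsub x2 (u tau)) < r ->
    bnorm (f t1 x1) <= M /\ bnorm (bsub (f t1 x1) (f t2 x2)) <= L * (Rabs (t1 - t2) + bnorm (bsub x1 x2)).

Section Frechet.
Context {X : Type} {BX : Banach X}.
Variable T : R.
Variable f : R -> X -> X.
Variable Df : R -> X -> R -> X -> X.
Hypothesis HFr : forall t x, 0 <= t <= T -> forall eps, eps > 0 -> exists delta, delta > 0 /\
  forall s y, 0 <= t + s <= T -> Rabs s + bnorm y < delta ->
    bnorm (bsub (bsub (f (t + s) (badd x y)) (f t x)) (Df t x s y)) <= eps * (Rabs s + bnorm y).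

Lemma frechet_segment_lipschitz t1 x1 t2 x2 Vb : 0 <= Vb ->
  (forall th, 0 <= th <= 1 -> 0 <= t2 + th * (t1 - t2) <= T /\
     forall s y, bnorm (Df (t2 + th * (t1 - t2)) (badd x2 (bscal th (bsub x1 x2))) s y)
                 <= Vb * (Rabs s + bnorm y)) ->
  bnorm (bsub (f t1 x1) (f t2 x2)) <= (Vb + 1) * (Rabs (t1 - t2) + bnorm (bsub x1 x2)).
Proof.
  intros HVb Hseg.
  set (dt := t1 - t2). set (dx := bsub x1 x2).
  set (tt := fun th => t2 + th * dt). set (xx := fun th => badd x2 (bscal th dx)).
  set (g := fun th => f (tt th) (xx th)).
  set (B := (Vb + 1) * (Rabs dt + bnorm dx)).
  assert (Hn : 0 <= Rabs dt + bnorm dx) by (pose proof (Rabs_pos dt); pose proof (bnorm_ge0 dx); lra).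
  assert (HB : 0 <= B) by (unfold B; nra).
  assert (Hloc : forall th0, 0 <= th0 <= 1 -> exists eta, eta > 0 /\ forall th, 0 <= th <= 1 ->
     Rabs (th - th0) < eta -> bnorm (bsub (g th) (g th0)) <= B * Rabs (th - th0)).
  { intros th0 Hth0. destruct (Hseg th0 Hth0) as [Ht0 HDf].
    destruct (HFr (tt th0) (xx th0) Ht0 1 ltac:(lra)) as [del [Hdel Hfr]].
    exists (del / (Rabs dt + bnorm dx + 1)). split; [apply Rdiv_lt_0_compat; lra|].
    intros th Hth Hlt. destruct (Hseg th Hth) as [Ht _].
    set (s := (th - th0) * dt). set (y := bscal (th - th0) dx).
    assert (Hsy : Rabs s + bnorm y = Rabs (th - th0) * (Rabs dt + bnorm dx))
      by (unfold s, y; rewrite Rabs_mult, bnorm_scal; ring).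
    assert (Hsmall : Rabs s + bnorm y < del).
    { rewrite Hsy. apply (Rmult_lt_compat_r (Rabs dt + bnorm dx + 1)) in Hlt; [|lra].
      replace (del / (Rabs dt + bnorm dx + 1) * (Rabs dt + bnorm dx + 1)) with del in Hlt by (field; lra).
      pose proof (Rabs_pos (th - th0)). nra. }
    assert (Eg : g th = f (tt th0 + s) (badd (xx th0) y))
      by (unfold g; f_equal; [unfold tt, s; ring|unfold xx, y; vring]).
    specialize (Hfr s y ltac:(replace (tt th0 + s) with (tt th) by (unfold tt, s; ring); exact Ht) Hsmall).
    rewrite <- Eg in Hfr. fold (g th0) in Hfr.
    specialize (HDf s y). change (bnorm (Df (tt th0) (xx th0) s y) <= Vb * (Rabs s + bnorm y)) in HDf.
    replace (bsub (g th) (g th0))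
      with (badd (bsub (bsub (g th) (g th0)) (Df (tt th0) (xx th0) s y)) (Df (tt th0) (xx th0) s y)) by vring.
    eapply Rle_trans; [apply bnorm_triangle|]. rewrite Hsy in Hfr, HDf.
    replace (B * Rabs (th - th0)) with (1 * (Rabs (th - th0) * (Rabs dt + bnorm dx))
                                       + Vb * (Rabs (th - th0) * (Rabs dt + bnorm dx))) by (unfold B; ring).
    lra. }
  assert (E1 : g 1 = f t1 x1) by (unfold g; f_equal; [unfold tt, dt; ring|unfold xx, dx; vring]).
  assert (E0 : g 0 = f t2 x2) by (unfold g; f_equal; [unfold tt; ring|unfold xx; vring]).
  rewrite <- E1, <- E0. apply Rle_trans with (B * (1 - 0)); [|right; unfold B; ring].
  apply local_lipschitz_mean_value; auto. lra.
Qed.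

End Frechet.

Lemma ball_convex {X} {BX : Banach X} (c t1 t2 : R) (xc x1 x2 : X) r th : 0 <= th <= 1 ->
  Rabs (t1 - c) + bnorm (bsub x1 xc) < r -> Rabs (t2 - c) + bnorm (bsub x2 xc) < r ->
  Rabs (t2 + th * (t1 - t2) - c) + bnorm (bsub (badd x2 (bscal th (bsub x1 x2))) xc) < r.
Proof.
  intros Hth H1 H2.
  replace (t2 + th * (t1 - t2) - c) with ((1 - th) * (t2 - c) + th * (t1 - c)) by ring.
  replace (bsub (badd x2 (bscal th (bsub x1 x2))) xc)
    with (badd (bscal (1 - th) (bsub x2 xc)) (bscal th (bsub x1 xc))) by vring.
  pose proof (Rabs_triang ((1 - th) * (t2 - c)) (th * (t1 - c))) as Ht.
  pose proof (bnorm_triangle (bscal (1 - th) (bsub x2 xc)) (bscal th (bsub x1 xc))) as Hx.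
  rewrite !Rabs_mult, (Rabs_pos_eq (1 - th)), (Rabs_pos_eq th) in Ht by lra.
  rewrite !bnorm_scal, (Rabs_pos_eq (1 - th)), (Rabs_pos_eq th) in Hx by lra.
  assert ((1 - th) * (Rabs (t2 - c) + bnorm (bsub x2 xc)) + th * (Rabs (t1 - c) + bnorm (bsub x1 xc)) < r)
    by (destruct (Req_dec th 1) as [->|]; nra).
  nra.
Qed.

Section Tube.
Context {X : Type} {BX : Banach X}.
Variable T : R.
Variable f : R -> X -> X.
Variable u : R -> X.
Variable Df : R -> X -> R -> X -> X.
Hypothesis HT : 0 <= T.
Hypothesis Hu : cont_on 0 T u.
Hypothesis HDb : forall t x, 0 <= t <= T -> exists M, forall s y, bnorm (Df t x s y) <= M * (Rabs s + bnorm y).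
Hypothesis HFr : forall t x, 0 <= t <= T -> forall eps, eps > 0 -> exists delta, delta > 0 /\
  forall s y, 0 <= t + s <= T -> Rabs s + bnorm y < delta ->
    bnorm (bsub (bsub (f (t + s) (badd x y)) (f t x)) (Df t x s y)) <= eps * (Rabs s + bnorm y).
Hypothesis HDc : forall t x, 0 <= t <= T -> forall eps, eps > 0 -> exists delta, delta > 0 /\
  forall t' x', 0 <= t' <= T -> Rabs (t' - t) + bnorm (bsub x' x) < delta ->
    forall s y, bnorm (bsub (Df t' x' s y) (Df t x s y)) <= eps * (Rabs s + bnorm y).

(* The radius [/(1 + Vb)] shrinks as the bound [Vb] grows, which makes the property monotone in [Vb]. *)
Definition tube_bounded tau Vb := 0 <= Vb /\ forall t' x', 0 <= t' <= T ->
  Rabs (t' - tau) + bnorm (bsub x' (u tau)) < / (1 + Vb) ->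
  bnorm (f t' x') <= Vb /\ forall s y, bnorm (Df t' x' s y) <= Vb * (Rabs s + bnorm y).

Lemma tube_bounded_mono tau v v' : tube_bounded tau v -> v <= v' -> tube_bounded tau v'.
Proof.
  intros [Hv H] Hvv. split; [lra|]. intros t' x' Ht' Hd.
  assert (/ (1 + v') <= / (1 + v)) by (apply Rinv_le_contravar; lra).
  destruct (H t' x' Ht' ltac:(lra)) as [H1 H2]. split; [lra|].
  intros s y. specialize (H2 s y). pose proof (Rabs_pos s). pose proof (bnorm_ge0 y). nra.
Qed.

Lemma frechet_locally_bounded c xc : 0 <= c <= T -> exists rho Ml, rho > 0 /\ 0 <= Ml /\
  forall t' x', 0 <= t' <= T -> Rabs (t' - c) + bnorm (bsub x' xc) < rho ->
    bnorm (f t' x') <= Ml /\ forall s y, bnorm (Df t' x' s y) <= Ml * (Rabs s + bnorm y).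
Proof.
  intros Hc. destruct (HDb c xc Hc) as [Mc HMc]. set (M1 := Rabs Mc + 1).
  destruct (HDc c xc Hc 1 ltac:(lra)) as [d1 [Hd1 H1]].
  destruct (HFr c xc Hc 1 ltac:(lra)) as [d2 [Hd2 H2]].
  set (rho := Rmin d1 d2). assert (rho <= d1) by apply Rmin_l. assert (rho <= d2) by apply Rmin_r.
  assert (Hrho : 0 < rho) by (apply Rmin_glb_lt; lra).
  assert (HM10 : 1 <= M1) by (unfold M1; pose proof (Rabs_pos Mc); lra).
  exists rho, (Rmax M1 (bnorm (f c xc) + M1 * rho)). split; [lra|].
  split; [pose proof (Rmax_l M1 (bnorm (f c xc) + M1 * rho)); lra|].
  intros t' x' Ht' Hnear.
  assert (HMc_abs : forall s y, Mc * (Rabs s + bnorm y) <= Rabs Mc * (Rabs s + bnorm y)).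
  { intros s y. apply Rmult_le_compat_r; [pose proof (Rabs_pos s); pose proof (bnorm_ge0 y); lra|apply Rle_abs]. }
  split.
  - specialize (H2 (t' - c) (bsub x' xc) ltac:(replace (c + (t' - c)) with t' by ring; lra) ltac:(lra)).
    replace (c + (t' - c)) with t' in H2 by ring. replace (badd xc (bsub x' xc)) with x' in H2 by vring.
    replace (f t' x') with (badd (badd (bsub (bsub (f t' x') (f c xc)) (Df c xc (t' - c) (bsub x' xc))) (f c xc))
                                 (Df c xc (t' - c) (bsub x' xc))) by vring.
    eapply Rle_trans; [apply bnorm_triangle|]. eapply Rle_trans; [apply Rplus_le_compat_r, bnorm_triangle|].
    specialize (HMc (t' - c) (bsub x' xc)). specialize (HMc_abs (t' - c) (bsub x' xc)).
    assert (M1 * (Rabs (t' - c) + bnorm (bsub x' xc)) <= M1 * rho) by (apply Rmult_le_compat_l; lra).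
    eapply Rle_trans; [|apply Rmax_r]. unfold M1 in *. lra.
  - intros s y. specialize (H1 t' x' Ht' ltac:(lra) s y).
    pose proof (bnorm_sub_ge (Df t' x' s y) (Df c xc s y)). specialize (HMc s y). specialize (HMc_abs s y).
    assert (M1 * (Rabs s + bnorm y) <= Rmax M1 (bnorm (f c xc) + M1 * rho) * (Rabs s + bnorm y))
      by (apply Rmult_le_compat_r; [pose proof (Rabs_pos s); pose proof (bnorm_ge0 y); lra|apply Rmax_l]).
    unfold M1 in *. lra.
Qed.

Lemma tube_bounded_local c : 0 <= c <= T -> exists d, d > 0 /\ exists Vc,
  forall tau, 0 <= tau <= T -> Rabs (tau - c) < d -> tube_bounded tau Vc.
Proof.
  intros Hc. destruct (frechet_locally_bounded c (u c) Hc) as (rho & Ml & Hrho & HMl & Hb).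
  destruct (Hu c Hc (rho / 4) ltac:(lra)) as [d [Hd Hcont]].
  exists (Rmin d (rho / 4)). split; [apply Rmin_glb_lt; lra|].
  pose proof (Rmin_l d (rho / 4)). pose proof (Rmin_r d (rho / 4)).
  set (Vc := Rmax Ml (2 / rho)). assert (Ml <= Vc) by apply Rmax_l. assert (2 / rho <= Vc) by apply Rmax_r.
  exists Vc. intros tau Htau Htc.
  assert (Hclose : Rabs (tau - c) + bnorm (bsub (u tau) (u c)) < rho / 2).
  { destruct (Req_dec tau c) as [->|Hne].
    - rewrite bnorm_sub_diag, Rminus_diag, Rabs_R0. lra.
    - specialize (Hcont tau Htau Hne ltac:(lra)). lra. }
  split; [lra|]. intros t' x' Ht' Hd'.
  assert (Hinv : / (1 + Vc) < rho / 2).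
  { apply (Rmult_lt_reg_r (1 + Vc)); [lra|]. rewrite Rinv_l by lra.
    assert (2 / rho * rho = 2) by (field; lra). nra. }
  destruct (Hb t' x' Ht') as [Hf HDf].
  { pose proof (bnorm_sub_triangle x' (u tau) (u c)). replace (t' - c) with ((t' - tau) + (tau - c)) by ring.
    pose proof (Rabs_triang (t' - tau) (tau - c)). lra. }
  split; [lra|]. intros s y. specialize (HDf s y). pose proof (Rabs_pos s); pose proof (bnorm_ge0 y). nra.
Qed.

Lemma tube_bounded_exists : exists Vb, forall tau, 0 <= tau <= T -> tube_bounded tau Vb.
Proof.
  apply compact_local_to_global; [exact HT| |exact tube_bounded_local].
  intros; eapply tube_bounded_mono; eauto.
Qed.

End Tube.

Lemma C1_TX_tube_lipschitz {X} {BX : Banach X} T (f : R -> X -> X) u : 0 <= T -> C1_TX T f -> cont_on 0 T u ->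
  exists r M L, r > 0 /\ 0 <= M /\ 0 <= L /\ tube_lipschitz T f u r M L.
Proof.
  intros HT [Df [HDf1 [HFr HDc]]] Hu.
  destruct (tube_bounded_exists T f u Df HT Hu (fun t x Ht => proj2 (HDf1 t x Ht)) HFr HDc) as [Vb Htube].
  assert (HVb : 0 <= Vb) by apply (Htube 0 ltac:(lra)).
  exists (/ (1 + Vb)), Vb, (Vb + 1). split; [apply Rinv_0_lt_compat; lra|]. split; [lra|]. split; [lra|].
  intros tau t1 x1 t2 x2 Htau Ht1 Ht2 Hx1 Hx2. destruct (Htube tau Htau) as [_ Hb].
  split; [apply (Hb t1 x1 Ht1 Hx1)|].
  apply (frechet_segment_lipschitz T f Df HFr); auto.
  intros th Hth. split; [nra|]. apply Hb; [nra|]. apply ball_convex; auto.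
Qed.

(** * Local error of the modified Strang step *)

Section TubeODE.
Context {X : Type} {BX : Banach X}.
Variables (T : R) (f : R -> X -> X) (u : R -> X) (r M L : R).
Hypothesis HM : 0 <= M.
Hypothesis HL : 0 <= L.
Hypothesis Htube : tube_lipschitz T f u r M L.

Lemma tube_ode_step c tau h x : 0 <= c <= tau -> tau + h <= T -> 0 < h -> h * L <= 1/2 ->
  (tau + h - c) + bnorm (bsub x (u c)) + h * M < r ->
  exists z, z 0 = x /\ deriv_on 0 h z (fun s => f (tau + s) (z s)) /\
    bnorm (bsub (bsub (z h) x) (bscal h (f tau x))) <= L * (1 + M) * h ^ 2.
Proof.
  intros Hc HT Hh HhL Hr.
  assert (Hin : forall s x', 0 <= s <= h -> bnorm (bsub x' x) <= h * M ->
            0 <= tau + s <= T /\ Rabs (tau + s - c) + bnorm (bsub x' (u c)) < r).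
  { intros s x' Hs Hx'. split; [lra|]. rewrite Rabs_pos_eq by lra.
    pose proof (bnorm_sub_triangle x' x (u c)). lra. }
  destruct (ode_local_solution (fun s x' => f (tau + s) x') x h (h * M) M L Hh HM HL
              ltac:(lra) HhL) as [z [Hz0 [Hzd Hz]]].
  - intros s x' Hs Hx'. destruct (Hin s x' Hs Hx') as [Hts Hd].
    apply (Htube c (tau + s) x' (tau + s) x'); lra.
  - intros s1 x1 s2 x2 Hs1 Hx1 Hs2 Hx2.
    destruct (Hin s1 x1 Hs1 Hx1) as [Ht1 Hd1]. destruct (Hin s2 x2 Hs2 Hx2) as [Ht2 Hd2].
    replace (s1 - s2) with ((tau + s1) - (tau + s2)) by ring.
    apply (Htube c (tau + s1) x1 (tau + s2) x2); lra.
  - exists z. split; [auto|split; [auto|]].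
    specialize (Hz h ltac:(lra)). rewrite Rplus_0_r in Hz. exact Hz.
Qed.

Lemma tube_step_consistency c tau h x (Pv : X) e : 0 <= c <= tau -> tau + h <= T -> 0 < h -> h * L <= 1/2 ->
  (tau + h - c) + bnorm (bsub x (u c)) + h * M < r ->
  (forall z, z 0 = x -> deriv_on 0 h z (fun s => f (tau + s) (z s)) -> bnorm (bsub Pv (z h)) <= e) ->
  bnorm (bsub Pv (badd x (bscal h (f tau x)))) <= e + L * (1 + M) * h ^ 2.
Proof.
  intros Hc HT Hh HhL Hr Hord.
  destruct (tube_ode_step c tau h x Hc HT Hh HhL Hr) as [z [Hz0 [Hzd Hz]]].
  specialize (Hord z Hz0 Hzd).
  replace (bsub Pv (badd x (bscal h (f tau x))))
    with (badd (bsub Pv (z h)) (bsub (bsub (z h) x) (bscal h (f tau x)))) by vring.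
  eapply Rle_trans; [apply bnorm_triangle|]. lra.
Qed.

End TubeODE.

Lemma pow_le_pow2 x n : 0 <= x <= 1 -> (2 <= n)%nat -> x ^ n <= x ^ 2.
Proof.
  intros Hx Hn. induction n; [lia|]. destruct (Nat.eq_dec n 1) as [->|Hne]; [simpl; lra|].
  assert (x ^ n <= x ^ 2) by (apply IHn; lia). simpl. pose proof (pow_le x n ltac:(lra)). nra.
Qed.

Lemma resolvent_at_0 {X Y} {BX : Banach X} {BY : Banach Y} (D : X -> Prop) (A : X -> X) (dA : X -> Y)
    (K : R -> Y -> X) omega : omega < 0 ->
  (forall z v, z > omega -> D (K z v) /\ A (K z v) = bscal z (K z v) /\ dA (K z v) = v /\
      (forall x, D x -> A x = bscal z x -> dA x = v -> x = K z v)) ->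
  (forall v, D (K 0 v) /\ A (K 0 v) = bzero /\ dA (K 0 v) = v) /\
  (forall x v, D x -> A x = bzero -> dA x = v -> x = K 0 v).
Proof.
  intros Homega HK. split.
  - intros v. destruct (HK 0 v ltac:(lra)) as [H1 [H2 [H3 _]]]. rewrite bscal_0_l in H2. auto.
  - intros x v Hx HAx Hdx. destruct (HK 0 v ltac:(lra)) as [_ [_ [_ H]]].
    apply H; auto. rewrite bscal_0_l; auto.
Qed.

Section StrangLocalError.
Context {X Y : Type} {BX : Banach X} {BY : Banach Y}.
Variables (T : R) (D : X -> Prop) (A : X -> X) (dA : X -> Y) (f : R -> X -> X) (u : R -> X).
Variables (S : R -> X -> X) (K : R -> Y -> X) (Psi : R -> R -> X -> X) (p : nat).
Variables (Ms r M L B2 Ba Baa Baf Cp k1 : R).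
Hypothesis HT : 0 <= T.
Hypothesis HMs : 0 <= Ms.
Hypothesis HSlin : forall t, t >= 0 -> lin_on (fun _ => True) (S t).
Hypothesis HSbd : forall t x, t >= 0 -> bnorm (S t x) <= Ms * bnorm x.
Hypothesis HS0 : forall x, S 0 x = x.
Hypothesis HSadd : forall t s x, t >= 0 -> s >= 0 -> S (t + s) x = S t (S s x).
Hypothesis HScont : forall x, lim_in (fun t => t >= 0) (fun t => S t x) 0 x.
Hypothesis HD : subspace D.
Hypothesis HA : lin_on D A.
Hypothesis HdA : lin_on D dA.
Hypothesis HK0 : forall v, D (K 0 v) /\ A (K 0 v) = bzero /\ dA (K 0 v) = v.
Hypothesis HK0_uniq : forall x v, D x -> A x = bzero -> dA x = v -> x = K 0 v.
Hypothesis Hgen : forall x, D x -> dA x = bzero ->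
  lim_in (fun h => h > 0) (fun h => bscal (/ h) (bsub (S h x) x)) 0 (A x).
Hypothesis Hr : r > 0.
Hypothesis HM : 0 <= M.
Hypothesis HL : 0 <= L.
Hypothesis Htube : tube_lipschitz T f u r M L.
Hypothesis Htaylor : forall t h, 0 <= t -> 0 <= h -> t + h <= T ->
  bnorm (bsub (bsub (u (t + h)) (u t)) (bscal h (badd (A (u t)) (f t (u t))))) <= B2 * h ^ 2.
Hypothesis HDu : forall t, 0 <= t <= T -> D (u t) /\ D (A (u t)) /\ D (f t (u t)).
Hypothesis HBa : forall t, 0 <= t <= T -> bnorm (A (u t)) <= Ba.
Hypothesis HBaa : forall t, 0 <= t <= T -> bnorm (A (A (u t))) <= Baa.
Hypothesis HBaf : forall t, 0 <= t <= T -> bnorm (A (f t (u t))) <= Baf.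
Hypothesis Hp : (p >= 1)%nat.
Hypothesis Hk1 : k1 > 0.
Hypothesis Hord : forall (k : R) (n : nat), 0 < k <= k1 -> INR (Datatypes.S n) * k <= T ->
  (forall v : R -> X, v 0 = u (INR n * k) ->
     deriv_on 0 (k / 2) v (fun s => f (INR n * k + s) (v s)) ->
     bnorm (bsub (Psi (k / 2) (INR n * k) (u (INR n * k))) (v (k / 2))) <= Cp * (k / 2) ^ (p + 1)) /\
  (forall z : R -> X, z 0 = wbar_k S K A dA f Psi u k n ->
     deriv_on 0 (k / 2) z (fun s => f (INR n * k + k / 2 + s) (z s)) ->
     bnorm (bsub (Psi (k / 2) (INR n * k + k / 2) (wbar_k S K A dA f Psi u k n)) (z (k / 2)))
       <= Cp * (k / 2) ^ (p + 1)).

Definition half_step_const := Rabs Cp + L * (1 + M).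
Definition wbar_affine_const := Ms * half_step_const + Ms * Baa + Ms * Baf.
Definition wbar_near_const := wbar_affine_const + M + Ba.
Definition strang_step_const := half_step_const + wbar_affine_const + L * (1 + wbar_near_const) + B2.

Definition admissible_step k n := 0 < k /\ k <= 1 /\ k <= k1 /\ k * L <= 1 /\
  k * (1 + wbar_near_const + M) < r /\ INR (Datatypes.S n) * k <= T.

Lemma strang_consts_nonneg : 0 <= half_step_const /\ 0 <= wbar_affine_const /\ 0 <= wbar_near_const.
Proof.
  pose proof (HBa 0 ltac:(lra)). pose proof (HBaa 0 ltac:(lra)). pose proof (HBaf 0 ltac:(lra)).
  pose proof (bnorm_ge0 (A (u 0))). pose proof (bnorm_ge0 (A (A (u 0)))). pose proof (bnorm_ge0 (A (f 0 (u 0)))).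
  pose proof (Rabs_pos Cp).
  assert (HCP : 0 <= half_step_const) by (unfold half_step_const; nra).
  assert (HCW : 0 <= wbar_affine_const) by (unfold wbar_affine_const; nra).
  unfold wbar_near_const. repeat split; lra.
Qed.

Lemma admissible_step_time k n : admissible_step k n -> 0 <= INR n * k /\ INR n * k + k <= T.
Proof.
  intros (Hk & _ & _ & _ & _ & HnT). rewrite S_INR in HnT. pose proof (pos_INR n). split; nra.
Qed.

Lemma order_bound_pow2 k : 0 < k <= 1 -> Cp * (k / 2) ^ (p + 1) <= Rabs Cp * (k / 2) ^ 2.
Proof.
  intros Hk. assert ((k / 2) ^ (p + 1) <= (k / 2) ^ 2) by (apply pow_le_pow2; lra || lia).
  eapply Rle_trans; [apply Rmult_le_compat_r; [apply pow_le; lra|apply Rle_abs]|].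
  apply Rmult_le_compat_l; [apply Rabs_pos|auto].
Qed.

Lemma first_half_step_error k n : admissible_step k n ->
  let tn := INR n * k in
  bnorm (bsub (Psi (k / 2) tn (u tn)) (badd (u tn) (bscal (k / 2) (f tn (u tn))))) <= half_step_const * (k / 2) ^ 2.
Proof.
  intros Hadm tn. destruct (admissible_step_time k n Hadm) as [Htn HtnT]. fold tn in Htn, HtnT.
  pose proof strang_consts_nonneg as (HCP & _ & HCwu).
  destruct Hadm as (Hk & Hk1' & Hkk1 & HkL & Hkr & HnT).
  destruct (Hord k n ltac:(lra) HnT) as [Hord1 _].
  eapply Rle_trans.
  - apply (tube_step_consistency T f u r M L HM HL Htube tn tn (k / 2)); try lra; [|exact Hord1].
    rewrite bnorm_sub_diag. assert (0 <= k * wbar_near_const) by (apply Rmult_le_pos; lra). lra.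
  - pose proof (order_bound_pow2 k ltac:(lra)). unfold half_step_const. lra.
Qed.

Lemma wbar_affine_error k n : admissible_step k n ->
  let tn := INR n * k in
  bnorm (bsub (wbar_k S K A dA f Psi u k n)
              (badd (badd (u tn) (bscal (k / 2) (f tn (u tn)))) (bscal k (A (u tn))))) <= wbar_affine_const * k ^ 2.
Proof.
  intros Hadm tn. pose proof (first_half_step_error k n Hadm) as HP. cbv zeta in HP. fold tn in HP.
  pose proof strang_consts_nonneg as (HCP & HCW & _).
  destruct (admissible_step_time k n Hadm) as [Htn HtnT]. fold tn in Htn, HtnT.
  destruct Hadm as (Hk & Hk1' & _).
  destruct (HDu tn ltac:(lra)) as (HDu0 & HDa & HDf0).
  assert (HDx0 : D (badd (u tn) (bscal (k / 2) (f tn (u tn))))) by (apply subspace_add, subspace_scal; auto).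
  unfold wbar_k. fold tn.
  eapply Rle_trans; [eapply (gen_sol_affine_error S Ms); eauto; lra|].
  rewrite (lin_on_add D A), (lin_on_scal D A) by (auto; apply subspace_scal; auto).
  replace (bsub (badd (A (u tn)) (bscal (k / 2) (A (f tn (u tn))))) (A (u tn)))
    with (bscal (k / 2) (A (f tn (u tn)))) by vring.
  rewrite bnorm_scal, Rabs_pos_eq by lra.
  pose proof (HBaa tn ltac:(lra)). pose proof (HBaf tn ltac:(lra)).
  assert (Ms * bnorm (bsub (Psi (k / 2) tn (u tn)) (badd (u tn) (bscal (k / 2) (f tn (u tn)))))
          <= Ms * (half_step_const * k ^ 2)).
  { apply Rmult_le_compat_l; [lra|]. eapply Rle_trans; [apply HP|].
    apply Rmult_le_compat_l; [lra|]. simpl. nra. }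
  assert (k ^ 2 * (Ms * bnorm (A (A (u tn)))) <= k ^ 2 * (Ms * Baa))
    by (apply Rmult_le_compat_l; [simpl; nra|apply Rmult_le_compat_l; lra]).
  assert (k * (Ms * (k / 2 * bnorm (A (f tn (u tn))))) <= k ^ 2 * (Ms * Baf)).
  { pose proof (bnorm_ge0 (A (f tn (u tn)))).
    replace (k * (Ms * (k / 2 * bnorm (A (f tn (u tn)))))) with (k ^ 2 * (Ms * (bnorm (A (f tn (u tn))) / 2)))
      by (simpl; field).
    apply Rmult_le_compat_l; [simpl; nra|apply Rmult_le_compat_l; lra]. }
  unfold wbar_affine_const. lra.
Qed.

Lemma wbar_near_u k n : admissible_step k n ->
  bnorm (bsub (wbar_k S K A dA f Psi u k n) (u (INR n * k))) <= k * wbar_near_const.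
Proof.
  intros Hadm. pose proof (wbar_affine_error k n Hadm) as HW. cbv zeta in HW.
  pose proof strang_consts_nonneg as (_ & HCW & _).
  destruct (admissible_step_time k n Hadm) as [Htn HtnT].
  destruct Hadm as (Hk & Hk1' & _).
  set (tn := INR n * k) in *. set (W := wbar_k S K A dA f Psi u k n) in *.
  set (F0 := f tn (u tn)) in *. set (a := A (u tn)) in *.
  assert (HF0 : bnorm F0 <= M)
    by (apply (Htube tn tn (u tn) tn (u tn)); try rewrite Rminus_diag, Rabs_R0, bnorm_sub_diag; lra).
  assert (Ha : bnorm a <= Ba) by (apply HBa; lra).
  replace (bsub W (u tn)) with (badd (bsub W (badd (badd (u tn) (bscal (k / 2) F0)) (bscal k a)))
                                     (badd (bscal (k / 2) F0) (bscal k a))) by vring.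
  eapply Rle_trans; [apply bnorm_triangle|].
  eapply Rle_trans; [apply Rplus_le_compat_l, bnorm_triangle|].
  rewrite !bnorm_scal, !Rabs_pos_eq by lra.
  assert (wbar_affine_const * k ^ 2 <= wbar_affine_const * k) by (apply Rmult_le_compat_l; [lra|simpl; nra]).
  assert (k / 2 * bnorm F0 <= k * M) by (pose proof (bnorm_ge0 F0); nra).
  assert (k * bnorm a <= k * Ba) by (apply Rmult_le_compat_l; lra).
  unfold wbar_near_const. lra.
Qed.

Lemma second_half_step_error k n : admissible_step k n ->
  let tn := INR n * k in let W := wbar_k S K A dA f Psi u k n in
  bnorm (bsub (Psi (k / 2) (tn + k / 2) W) (badd W (bscal (k / 2) (f (tn + k / 2) W)))) <= half_step_const * (k / 2) ^ 2.
Proof.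
  intros Hadm tn W. pose proof (wbar_near_u k n Hadm) as HWu. pose proof strang_consts_nonneg as (HCP & _ & HCwu).
  destruct (admissible_step_time k n Hadm) as [Htn HtnT]. fold tn W in HWu, Htn, HtnT.
  destruct Hadm as (Hk & Hk1' & Hkk1 & HkL & Hkr & HnT).
  destruct (Hord k n ltac:(lra) HnT) as [_ Hord2].
  eapply Rle_trans.
  - apply (tube_step_consistency T f u r M L HM HL Htube tn (tn + k / 2) (k / 2)); try lra; [|exact Hord2].
    nra.
  - pose proof (order_bound_pow2 k ltac:(lra)). unfold half_step_const. lra.
Qed.

Lemma strang_local_error_le k n : admissible_step k n ->
  bnorm (bsub (Psi (k / 2) (INR n * k + k / 2) (wbar_k S K A dA f Psi u k n)) (u (INR (Datatypes.S n) * k)))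
    <= strang_step_const * k ^ 2.
Proof.
  intros Hadm.
  pose proof (second_half_step_error k n Hadm) as H1. pose proof (wbar_affine_error k n Hadm) as H2.
  cbv zeta in H1, H2.
  pose proof (wbar_near_u k n Hadm) as HWu. pose proof strang_consts_nonneg as (HCP & HCW & HCwu).
  destruct (admissible_step_time k n Hadm) as [Htn HtnT].
  destruct Hadm as (Hk & Hk1' & Hkk1 & HkL & Hkr & HnT).
  rewrite S_INR. replace ((INR n + 1) * k) with (INR n * k + k) by ring.
  set (tn := INR n * k) in *. set (W := wbar_k S K A dA f Psi u k n) in *.
  set (F0 := f tn (u tn)) in *. set (a := A (u tn)) in *. set (f2 := f (tn + k / 2) W) in *.
  set (Psi2 := Psi (k / 2) (tn + k / 2) W) in *.
  pose proof (Htaylor tn k Htn ltac:(lra) HtnT) as H5. fold F0 a in H5.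
  assert (H4 : bnorm (bsub f2 F0) <= L * (k / 2 + k * wbar_near_const)).
  { assert (Hd : Rabs (tn + k / 2 - tn) = k / 2)
      by (replace (tn + k / 2 - tn) with (k / 2) by ring; apply Rabs_pos_eq; lra).
    assert (0 <= k * wbar_near_const) by (apply Rmult_le_pos; lra). assert (0 <= k * M) by (apply Rmult_le_pos; lra).
    destruct (Htube tn (tn + k / 2) W tn (u tn)) as [_ Hlip];
      rewrite ?Hd, ?Rminus_diag, ?Rabs_R0, ?bnorm_sub_diag; try lra.
    eapply Rle_trans; [exact Hlip|]. rewrite Hd. apply Rmult_le_compat_l; lra. }
  replace (bsub Psi2 (u (tn + k)))
    with (badd (badd (badd (bsub Psi2 (badd W (bscal (k / 2) f2)))
                            (bsub W (badd (badd (u tn) (bscal (k / 2) F0)) (bscal k a))))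
                      (bscal (k / 2) (bsub f2 F0)))
               (bopp (bsub (bsub (u (tn + k)) (u tn)) (bscal k (badd a F0))))) by vring.
  eapply Rle_trans; [apply bnorm_triangle|]. rewrite bnorm_opp.
  eapply Rle_trans; [apply Rplus_le_compat_r, bnorm_triangle|].
  eapply Rle_trans; [apply Rplus_le_compat_r, Rplus_le_compat_r, bnorm_triangle|].
  rewrite bnorm_scal, Rabs_pos_eq by lra.
  assert (half_step_const * (k / 2) ^ 2 <= half_step_const * k ^ 2) by (apply Rmult_le_compat_l; [lra|simpl; nra]).
  assert (k / 2 * bnorm (bsub f2 F0) <= L * (1 + wbar_near_const) * k ^ 2).
  { assert (k / 2 * bnorm (bsub f2 F0) <= k / 2 * (L * (k / 2 + k * wbar_near_const))) by (apply Rmult_le_compat_l; lra).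
    assert (0 <= L * k ^ 2 * wbar_near_const) by (apply Rmult_le_pos; [apply Rmult_le_pos; [lra|simpl; nra]|lra]).
    assert (0 <= L * k ^ 2) by (apply Rmult_le_pos; [lra|simpl; nra]).
    simpl in *. nra. }
  unfold strang_step_const. lra.
Qed.

Lemma strang_local_error : exists C k0, k0 > 0 /\ forall (k : R) (n : nat), 0 < k <= k0 ->
  INR (Datatypes.S n) * k <= T ->
  bnorm (bsub (Psi (k / 2) (INR n * k + k / 2) (wbar_k S K A dA f Psi u k n)) (u (INR (Datatypes.S n) * k)))
    <= C * k ^ 2.
Proof.
  pose proof strang_consts_nonneg as (_ & _ & HCwu).
  set (kr := r / (2 * (1 + wbar_near_const + M))).
  assert (Hkr : 0 < kr) by (unfold kr; apply Rdiv_lt_0_compat; lra).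
  exists strang_step_const, (Rmin (Rmin 1 k1) (Rmin (/ (L + 1)) kr)).
  split; [repeat apply Rmin_glb_lt; try lra; apply Rinv_0_lt_compat; lra|].
  intros k n [Hk Hkk0] HnT. apply strang_local_error_le.
  pose proof (Rmin_l (Rmin 1 k1) (Rmin (/ (L + 1)) kr)). pose proof (Rmin_r (Rmin 1 k1) (Rmin (/ (L + 1)) kr)).
  pose proof (Rmin_l 1 k1). pose proof (Rmin_r 1 k1). pose proof (Rmin_l (/ (L + 1)) kr). pose proof (Rmin_r (/ (L + 1)) kr).
  repeat split; try lra.
  - assert (HkL : k * (L + 1) <= / (L + 1) * (L + 1)) by (apply Rmult_le_compat_r; lra).
    rewrite Rinv_l in HkL by lra. nra.
  - assert (Hk' : k * (1 + wbar_near_const + M) <= kr * (1 + wbar_near_const + M))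
      by (apply Rmult_le_compat_r; lra).
    replace (kr * (1 + wbar_near_const + M)) with (r / 2) in Hk' by (unfold kr; field; lra). lra.
Qed.

End StrangLocalError.

Theorem theorem4p2
  (X Y : Type) (BX : Banach X) (BY : Banach Y) (T : R)
  (D : X -> Prop) (A : X -> X) (dA : X -> Y)
  (f : R -> X -> X) (g : R -> Y) (u : R -> X)
  (Sg : R -> X -> X) (omega : R) (K : R -> Y -> X)
  (Psi : R -> R -> X -> X) (p : nat)
  (HT : T > 0)
  (Hlin : subspace D /\ lin_on D A /\ lin_on D dA)
  (* (A1) *)
  (HA1 : forall v : Y, exists x, D x /\ dA x = v)
  (* (A2) *)
  (HA2dense : forall x eps, eps > 0 ->
      exists y, D y /\ dA y = bzero /\ bnorm (bsub x y) < eps)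
  (HA2gen : C0_semigroup Sg /\ generates Sg (fun x => D x /\ dA x = bzero) A /\
            negative_type Sg omega)
  (* (A3), real spectral parameter z *)
  (HA3sol : forall z v, z > omega ->
      D (K z v) /\ A (K z v) = bscal z (K z v) /\ dA (K z v) = v /\
      (forall x, D x -> A x = bscal z x -> dA x = v -> x = K z v))
  (HA3bd : forall omega0, omega0 > omega -> exists C, forall z v, z >= omega0 ->
      bnorm (K z v) <= C * bnorm v)
  (* (A4) *)
  (HA4 : C1_TX T f)
  (Hu_dom : forall t, 0 <= t <= T -> D (u t) /\ dA (u t) = g t)
  (Hu_ode : deriv_on 0 T u (fun t => badd (A (u t)) (f t (u t))))
  (* (A5) *)
  (HA5 : C2_on 0 T u /\ (forall t, 0 <= t <= T -> D (u t) /\ D (A (u t))) /\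
         C1_on 0 T (fun t => A (u t)) /\ C1_on 0 T (fun t => A (A (u t))))
  (* (A6) *)
  (HA6 : (forall t, 0 <= t <= T -> D (f t (u t))) /\ cont_on 0 T (fun t => A (f t (u t))))
  (* Psi has order p >= 1 for the two subproblems *)
  (Hp : (p >= 1)%nat)
  (Horder : exists Cp k0, k0 > 0 /\ forall (k : R) (n : nat), 0 < k <= k0 ->
      INR (S n) * k <= T ->
      (forall v : R -> X, v 0 = u (INR n * k) ->
         deriv_on 0 (k / 2) v (fun s => f (INR n * k + s) (v s)) ->
         bnorm (bsub (Psi (k / 2) (INR n * k) (u (INR n * k))) (v (k / 2)))
           <= Cp * (k / 2) ^ (p + 1)) /\
      (forall z : R -> X, z 0 = wbar_k Sg K A dA f Psi u k n ->
         deriv_on 0 (k / 2) z (fun s => f (INR n * k + k / 2 + s) (z s)) ->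
         bnorm (bsub (Psi (k / 2) (INR n * k + k / 2) (wbar_k Sg K A dA f Psi u k n)) (z (k / 2)))
           <= Cp * (k / 2) ^ (p + 1))) :
  exists C k0, k0 > 0 /\ forall (k : R) (n : nat), 0 < k <= k0 ->
    INR (S n) * k <= T ->
    bnorm (bsub (Psi (k / 2) (INR n * k + k / 2) (wbar_k Sg K A dA f Psi u k n))
                (u (INR (S n) * k)))
      <= C * k ^ 2.
Proof.
  destruct Hlin as (HD & HA & HdA).
  destruct HA2gen as [[HSbl [HS0 [HSadd HScont]]] [Hgen Hneg]].
  destruct (negative_type_bounded Sg omega Hneg) as (Ms & HMs & HSbd).
  destruct (resolvent_at_0 D A dA K omega (proj1 Hneg) HA3sol) as [HK0 HK0_uniq].
  destruct HA5 as (HC2 & HDAu & HAuC1 & HAAuC1).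
  destruct HA6 as [HDfu HAfc].
  destruct (C2_on_taylor 0 T u _ HT Hu_ode HC2) as [B2 Htaylor].
  destruct (C1_on_bounded 0 T (fun t => A (u t)) ltac:(lra) HAuC1) as [Ba HBa].
  destruct (C1_on_bounded 0 T (fun t => A (A (u t))) ltac:(lra) HAAuC1) as [Baa HBaa].
  destruct (cont_on_bounded 0 T (fun t => A (f t (u t))) ltac:(lra) HAfc) as [Baf HBaf].
  destruct (C1_TX_tube_lipschitz T f u ltac:(lra) HA4 (deriv_on_cont_on 0 T 0 T u _ Hu_ode ltac:(lra) ltac:(lra)))
    as (r & M & L & Hr & HM & HL & Htube).
  destruct Horder as (Cp & k1 & Hk1 & Hord).
  apply (strang_local_error T D A dA f u Sg K Psi p Ms r M L B2 Ba Baa Baf Cp k1); auto; try lra.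
  - intros t Ht. apply (HSbl t Ht).
  - intros x Hx Hdx. apply (Hgen x). auto.
  - intros t Ht. destruct (HDAu t Ht). auto.
Qed.
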